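(* Let $G$ be a GP 2 host graph (node labels arbitrary lists) such that every node is marked grey, exactly one node $r$ is a root, every edge is unmarked and labelled with an integer (its weight), and there are no loops. Then the execution of the GP 2 program bellman-ford on $G$ terminates, and: if $G$ contains a directed cycle whose sum of edge labels is negative and which is reachable by a directed path from $r$, the program fails; otherwise it returns the graph obtained from $G$ by (1) appending to the label of each node $v$ reachable from $r$ by a directed path the minimum, over all directed paths from $r$ to $v$, of the sum of the edge labels along the path (this is $0$ for $v=r$), (2) appending the string ''f'' to the label of every other node, and (3) marking all edges blue.
   Context: GP 2 semantics. Host graphs are finite directed graphs whose nodes and edges carry labels (lists of integers and strings; ''x:s'' denotes the list x followed by the atom s) and marks (nodes: unmarked, red, green, blue, grey; edges: unmarked, red, green, blue, dashed); some nodes are roots. A rule (with typed variables, here list variables x,y and integer variables i,s,t,w) is applied by finding an injective match of its left-hand side compatible with labels (for some instantiation of variables of the right types) and marks (mark ''any'' matches every mark; roots match roots), satisfying the dangling condition (a left-hand node that is not kept must have no incident edges outside the match) and the rule's condition, then deleting/changing/adding items as prescribed by the right-hand side. Commands: a rule set call $\{r_1,\dots,r_k\}$ applies one applicable rule, failing if none applies; $P;Q$ sequencing (failure of $P$ or $Q$ makes $P;Q$ fail); $P!$ iterates $P$ until it fails, returning the graph on which $P$ was last entered; ''try $C$ then $P$ else $Q$'' runs $C$ and continues with $P$ on its result if it succeeded, else $Q$ on the original graph (missing branches do nothing); ''if $C$ then $P$ else $Q$'' runs $C$ on a copy then $P$ (if $C$ succeeded) or $Q$ on the original; fail causes failure.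 The program bellman-ford: Main = set_counter; count!; (decrement; Relax!; Clean!)!; Final Relax = root1; try no_deg else ((unmarked_edge; try {unvisited, reduce}; finish)!; unroot1) Clean = root2; unmark_edge!; unroot2 Final = (root1; (unmarked_edge; if reduce then set_flag; finish)!; unroot1)!; if flag then fail; delete_counter; no_deg_inv! Rules (edges directed from node 1 to node 2; labels unchanged unless stated): - set_counter(x): a grey root labelled x becomes a blue non-root labelled x:0; a new green non-root node labelled 0 is created, with a new dashed edge (empty label) from it to node 1. - count(x; i): a grey node 1 labelled x and a green node 2 labelled i; node 1 becomes blue labelled x:''f'', node 2 gets label i+1. - decrement(i): a green node labelled i, where i>0; its label becomes i−1. - root1(x): a blue node becomes a blue root. - no_deg(x): a blue root labelled x is deleted (so by the dangling condition only if it has no incident edges) and replaced by an unmarked non-root node labelled x. - unmarked_edge: blue root 1, node 2 of any mark, unmarked edge 1→2; the edge becomes red. - unvisited(x,y; s,w): blue root 1 labelled x:s, node 2 (any mark) labelled y:''f'', red edge 1→2 labelled w; node 2's label becomes y:(s+w). - reduce(x,y; s,t,w): blue root 1 labelled x:s, node 2 (any mark) labelled y:t, red edge 1→2 labelled w, condition s+w<t; node 2's label becomes y:(s+w). - finish: blue root 1, node 2 any mark, red edge 1→2; edge becomes blue. - unroot1: blue root becomes a grey non-root. - root2: grey node becomes a blue root. - unmark_edge: blue root 1, node 2 any mark, blue edge 1→2; edge becomes unmarked. - unroot2: blue root becomes a blue non-root. - set_flag(x): a green node; its label becomes −1. - flag(): a green node labelled −1; no change (test). - delete_counter(x,y): a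 grey node 1 labelled x, a green node labelled y and a dashed edge from the green node to node 1; the green node and dashed edge are deleted and node 1 becomes a grey root. - no_deg_inv(x): an unmarked node becomes grey. *)

From Stdlib Require Import List ZArith String.
Import ListNotations.

Inductive atom : Type := AInt (z : Z) | AStr (s : string).
Definition label := list atom.

Inductive nmark : Type := NUnmarked | NRed | NGreen | NBlue | NGrey.
Inductive emark : Type := EUnmarked | ERed | EGreen | EBlue | EDashed.

(* Nodes and edges are identified by natural numbers; only the items listed
   in gV / gE belong to the graph, the attribute functions are irrelevant
   outside them. *)
Record graph : Type := mkGraph {
  gV : list nat;
  gE : list nat;
  nlab : nat -> label;
  nmk : nat -> nmark;
  nroot : nat -> bool;
  src : nat -> nat;
  tgt : nat -> nat;
  elab : nat -> label;
  emk : nat -> emark }.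

Definition wf (G : graph) : Prop :=
  NoDup (gV G) /\ NoDup (gE G) /\
  forall e, In e (gE G) -> In (src G e) (gV G) /\ In (tgt G e) (gV G).

(* graph isomorphism (GP 2 results are determined up to isomorphism) *)
Definition iso (G H : graph) : Prop :=
  exists fV fE : nat -> nat,
    (forall v, In v (gV G) -> In (fV v) (gV H)) /\
    (forall v w, In v (gV G) -> In w (gV G) -> fV v = fV w -> v = w) /\
    (forall v', In v' (gV H) -> exists v, In v (gV G) /\ fV v = v') /\
    (forall e, In e (gE G) -> In (fE e) (gE H)) /\
    (forall e f, In e (gE G) -> In f (gE G) -> fE e = fE f -> e = f) /\
    (forall e', In e' (gE H) -> exists e, In e (gE G) /\ fE e = e') /\
    (forall e, In e (gE G) ->
       src H (fE e) = fV (src G e) /\ tgt H (fE e) = fV (tgt G e) /\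
       elab H (fE e) = elab G e /\ emk H (fE e) = emk G e) /\
    (forall v, In v (gV G) ->
       nlab H (fV v) = nlab G v /\ nmk H (fV v) = nmk G v /\
       nroot H (fV v) = nroot G v).

Definition upd {A : Type} (f : nat -> A) (x : nat) (a : A) : nat -> A :=
  fun y => if Nat.eqb y x then a else f y.

Definition set_nlab (G : graph) (v : nat) (l : label) : graph :=
  mkGraph (gV G) (gE G) (upd (nlab G) v l) (nmk G) (nroot G)
          (src G) (tgt G) (elab G) (emk G).
Definition set_nmk (G : graph) (v : nat) (m : nmark) : graph :=
  mkGraph (gV G) (gE G) (nlab G) (upd (nmk G) v m) (nroot G)
          (src G) (tgt G) (elab G) (emk G).
Definition set_nroot (G : graph) (v : nat) (b : bool) : graph :=
  mkGraph (gV G) (gE G) (nlab G) (nmk G) (upd (nroot G) v b)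
          (src G) (tgt G) (elab G) (emk G).
Definition set_emk (G : graph) (e : nat) (m : emark) : graph :=
  mkGraph (gV G) (gE G) (nlab G) (nmk G) (nroot G)
          (src G) (tgt G) (elab G) (upd (emk G) e m).
Definition add_node (G : graph) (v : nat) (l : label) (m : nmark) (b : bool) : graph :=
  mkGraph (v :: gV G) (gE G) (upd (nlab G) v l) (upd (nmk G) v m) (upd (nroot G) v b)
          (src G) (tgt G) (elab G) (emk G).
Definition add_edge (G : graph) (e s t : nat) (l : label) (m : emark) : graph :=
  mkGraph (gV G) (e :: gE G) (nlab G) (nmk G) (nroot G)
          (upd (src G) e s) (upd (tgt G) e t) (upd (elab G) e l) (upd (emk G) e m).
Definition del_node (G : graph) (v : nat) : graph :=
  mkGraph (remove Nat.eq_dec v (gV G)) (gE G) (nlab G) (nmk G) (nroot G)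
          (src G) (tgt G) (elab G) (emk G).
Definition del_edge (G : graph) (e : nat) : graph :=
  mkGraph (gV G) (remove Nat.eq_dec e (gE G)) (nlab G) (nmk G) (nroot G)
          (src G) (tgt G) (elab G) (emk G).

Inductive rule : Type :=
  | r_set_counter | r_count | r_decrement | r_root1 | r_no_deg
  | r_unmarked_edge | r_unvisited | r_reduce | r_finish | r_unroot1
  | r_root2 | r_unmark_edge | r_unroot2 | r_set_flag | r_flag
  | r_delete_counter | r_no_deg_inv.

(* Matches are injective (distinct left-hand nodes), unrestricted marks
   ("any") impose no constraint, left-hand root nodes must match roots,
   left-hand non-root nodes match any node, the dangling condition is
   imposed for deleted nodes, new items get fresh identifiers. *)
Definition rule_app (r : rule) (G H : graph) : Prop :=
  match r with
  | r_set_counter => exists v c e,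
      In v (gV G) /\ nmk G v = NGrey /\ nroot G v = true /\
      ~ In c (gV G) /\ ~ In e (gE G) /\
      H = add_edge
            (add_node
               (set_nroot (set_nmk (set_nlab G v (nlab G v ++ [AInt 0%Z])) v NBlue) v false)
               c [AInt 0%Z] NGreen false)
            e c v [] EDashed
  | r_count => exists v1 v2 i,
      In v1 (gV G) /\ In v2 (gV G) /\ v1 <> v2 /\
      nmk G v1 = NGrey /\ nmk G v2 = NGreen /\ nlab G v2 = [AInt i] /\
      H = set_nlab (set_nmk (set_nlab G v1 (nlab G v1 ++ [AStr "f"%string])) v1 NBlue)
                   v2 [AInt (i + 1)%Z]
  | r_decrement => exists v i,
      In v (gV G) /\ nmk G v = NGreen /\ nlab G v = [AInt i] /\ (0 < i)%Z /\
      H = set_nlab G v [AInt (i - 1)%Z]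
  | r_root1 => exists v,
      In v (gV G) /\ nmk G v = NBlue /\ H = set_nroot G v true
  | r_no_deg => exists v u,
      In v (gV G) /\ nmk G v = NBlue /\ nroot G v = true /\
      (forall e, In e (gE G) -> src G e <> v /\ tgt G e <> v) /\
      ~ In u (remove Nat.eq_dec v (gV G)) /\
      H = add_node (del_node G v) u (nlab G v) NUnmarked false
  | r_unmarked_edge => exists v1 v2 e,
      In v1 (gV G) /\ In v2 (gV G) /\ v1 <> v2 /\
      nmk G v1 = NBlue /\ nroot G v1 = true /\
      In e (gE G) /\ src G e = v1 /\ tgt G e = v2 /\ emk G e = EUnmarked /\
      H = set_emk G e ERed
  | r_unvisited => exists v1 v2 e xs ys s w,
      In v1 (gV G) /\ In v2 (gV G) /\ v1 <> v2 /\
      nmk G v1 = NBlue /\ nroot G v1 = true /\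
      nlab G v1 = xs ++ [AInt s] /\ nlab G v2 = ys ++ [AStr "f"%string] /\
      In e (gE G) /\ src G e = v1 /\ tgt G e = v2 /\ emk G e = ERed /\
      elab G e = [AInt w] /\
      H = set_nlab G v2 (ys ++ [AInt (s + w)%Z])
  | r_reduce => exists v1 v2 e xs ys s t w,
      In v1 (gV G) /\ In v2 (gV G) /\ v1 <> v2 /\
      nmk G v1 = NBlue /\ nroot G v1 = true /\
      nlab G v1 = xs ++ [AInt s] /\ nlab G v2 = ys ++ [AInt t] /\
      In e (gE G) /\ src G e = v1 /\ tgt G e = v2 /\ emk G e = ERed /\
      elab G e = [AInt w] /\ (s + w < t)%Z /\
      H = set_nlab G v2 (ys ++ [AInt (s + w)%Z])
  | r_finish => exists v1 v2 e,
      In v1 (gV G) /\ In v2 (gV G) /\ v1 <> v2 /\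
      nmk G v1 = NBlue /\ nroot G v1 = true /\
      In e (gE G) /\ src G e = v1 /\ tgt G e = v2 /\ emk G e = ERed /\
      H = set_emk G e EBlue
  | r_unroot1 => exists v,
      In v (gV G) /\ nmk G v = NBlue /\ nroot G v = true /\
      H = set_nroot (set_nmk G v NGrey) v false
  | r_root2 => exists v,
      In v (gV G) /\ nmk G v = NGrey /\
      H = set_nroot (set_nmk G v NBlue) v true
  | r_unmark_edge => exists v1 v2 e,
      In v1 (gV G) /\ In v2 (gV G) /\ v1 <> v2 /\
      nmk G v1 = NBlue /\ nroot G v1 = true /\
      In e (gE G) /\ src G e = v1 /\ tgt G e = v2 /\ emk G e = EBlue /\
      H = set_emk G e EUnmarked
  | r_unroot2 => exists v,
      In v (gV G) /\ nmk G v = NBlue /\ nroot G v = true /\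
      H = set_nroot G v false
  | r_set_flag => exists v,
      In v (gV G) /\ nmk G v = NGreen /\ H = set_nlab G v [AInt (-1)%Z]
  | r_flag => exists v,
      In v (gV G) /\ nmk G v = NGreen /\ nlab G v = [AInt (-1)%Z] /\ H = G
  | r_delete_counter => exists v1 v2 e,
      In v1 (gV G) /\ In v2 (gV G) /\ v1 <> v2 /\
      nmk G v1 = NGrey /\ nmk G v2 = NGreen /\
      In e (gE G) /\ src G e = v2 /\ tgt G e = v1 /\ emk G e = EDashed /\
      elab G e = [] /\
      (forall e', In e' (gE G) -> (src G e' = v2 \/ tgt G e' = v2) -> e' = e) /\
      H = set_nroot (del_node (del_edge G e) v2) v1 true
  | r_no_deg_inv => exists v,
      In v (gV G) /\ nmk G v = NUnmarked /\ H = set_nmk G v NGrey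
  end.

Inductive cmd : Type :=
  | Call (rs : list rule)
  | Seq (P Q : cmd)
  | Loop (P : cmd)                   (* P! *)
  | Try (C P Q : cmd)
  | If (C P Q : cmd)
  | FailC
  | Skip.                            (* missing branch *)

Inductive outcome : Type := Res (H : graph) | Fail.

Inductive exec : cmd -> graph -> outcome -> Prop :=
  | ex_call_ok rs r G H : In r rs -> rule_app r G H -> exec (Call rs) G (Res H)
  | ex_call_fail rs G :
      (forall r H, In r rs -> ~ rule_app r G H) -> exec (Call rs) G Fail
  | ex_seq_ok P Q G H o : exec P G (Res H) -> exec Q H o -> exec (Seq P Q) G o
  | ex_seq_fail P Q G : exec P G Fail -> exec (Seq P Q) G Fail
  | ex_loop_stop P G : exec P G Fail -> exec (Loop P) G (Res G)
  | ex_loop_step P G H o : exec P G (Res H) -> exec (Loop P) H o -> exec (Loop P) G o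
  | ex_try_then C P Q G H o : exec C G (Res H) -> exec P H o -> exec (Try C P Q) G o
  | ex_try_else C P Q G o : exec C G Fail -> exec Q G o -> exec (Try C P Q) G o
  | ex_if_then C P Q G H o : exec C G (Res H) -> exec P G o -> exec (If C P Q) G o
  | ex_if_else C P Q G o : exec C G Fail -> exec Q G o -> exec (If C P Q) G o
  | ex_fail G : exec FailC G Fail
  | ex_skip G : exec Skip G (Res G).

Inductive terminates : cmd -> graph -> Prop :=
  | t_call rs G : terminates (Call rs) G
  | t_seq P Q G : terminates P G ->
      (forall H, exec P G (Res H) -> terminates Q H) -> terminates (Seq P Q) G
  | t_loop P G : terminates P G ->
      (forall H, exec P G (Res H) -> terminates (Loop P) H) -> terminates (Loop P) G
  | t_try C P Q G : terminates C G ->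
      (forall H, exec C G (Res H) -> terminates P H) ->
      (exec C G Fail -> terminates Q G) -> terminates (Try C P Q) G
  | t_if C P Q G : terminates C G ->
      (forall H, exec C G (Res H) -> terminates P G) ->
      (exec C G Fail -> terminates Q G) -> terminates (If C P Q) G
  | t_fail G : terminates FailC G
  | t_skip G : terminates Skip G.

Definition Relax : cmd :=
  Seq (Call [r_root1])
      (Try (Call [r_no_deg]) Skip
           (Seq (Loop (Seq (Call [r_unmarked_edge])
                           (Seq (Try (Call [r_unvisited; r_reduce]) Skip Skip)
                                (Call [r_finish]))))
                (Call [r_unroot1]))).

Definition Clean : cmd :=
  Seq (Call [r_root2]) (Seq (Loop (Call [r_unmark_edge])) (Call [r_unroot2])).

Definition Final : cmd :=
  Seq (Loop (Seq (Call [r_root1])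
                 (Seq (Loop (Seq (Call [r_unmarked_edge])
                                 (Seq (If (Call [r_reduce]) (Call [r_set_flag]) Skip)
                                      (Call [r_finish]))))
                      (Call [r_unroot1]))))
      (Seq (If (Call [r_flag]) FailC Skip)
           (Seq (Call [r_delete_counter]) (Loop (Call [r_no_deg_inv])))).

Definition Main : cmd :=
  Seq (Call [r_set_counter])
      (Seq (Loop (Call [r_count]))
           (Seq (Loop (Seq (Call [r_decrement]) (Seq (Loop Relax) (Loop Clean))))
                Final)).

Definition ew (G : graph) (e : nat) : Z :=
  match elab G e with [AInt w] => w | _ => 0%Z end.

Definition weight (G : graph) (es : list nat) : Z :=
  fold_right (fun e acc => (ew G e + acc)%Z) 0%Z es.

Fixpoint walk (G : graph) (u : nat) (es : list nat) (v : nat) : Prop :=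
  match es with
  | [] => u = v
  | e :: es' => In e (gE G) /\ src G e = u /\ walk G (tgt G e) es' v
  end.

Definition dpath (G : graph) (u : nat) (es : list nat) (v : nat) : Prop :=
  walk G u es v /\ NoDup (u :: map (tgt G) es).

Definition dcycle (G : graph) (u : nat) (es : list nat) : Prop :=
  es <> [] /\ walk G u es u /\ NoDup (map (tgt G) es).

Definition reachable (G : graph) (r v : nat) : Prop :=
  exists es, dpath G r es v.

Definition min_dist (G : graph) (r v : nat) (d : Z) : Prop :=
  (exists es, dpath G r es v /\ weight G es = d) /\
  (forall es, dpath G r es v -> (d <= weight G es)%Z).

Definition neg_cycle_reachable (G : graph) (r : nat) : Prop :=
  exists u es, dcycle G u es /\ (weight G es < 0)%Z /\ reachable G r u.

Definition bf_result (G : graph) (r : nat) (H0 : graph) : Prop :=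
  gV H0 = gV G /\ gE H0 = gE G /\
  (forall e, In e (gE G) ->
     src H0 e = src G e /\ tgt H0 e = tgt G e /\ elab H0 e = elab G e /\
     emk H0 e = EBlue) /\
  (forall v, In v (gV G) ->
     nmk H0 v = nmk G v /\ nroot H0 v = nroot G v /\
     (reachable G r v ->
        exists d, min_dist G r v d /\ nlab H0 v = nlab G v ++ [AInt d]) /\
     (~ reachable G r v -> nlab H0 v = nlab G v ++ [AStr "f"%string])).

From Stdlib Require Import ZArith String List Lia Classical Wf_nat.
Import ListNotations.

(* The run of bellman-ford is simulated by distance estimates [D : nat -> option Z] ([None] is
   the label "f"). Throughout the loops the host graph is [G] plus a green counter node, with a
   dashed edge to the root, and each node carries [D] appended to its label; nodes that [no_deg]
   deletes and re-creates are tracked through an injective embedding.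

   [set_counter] and [count!] start from [D r = 0], [D v = "f"] otherwise, and set the counter to
   |V| - 1. Each round of the main loop is one Bellman-Ford pass: [Relax!] roots every node once
   and turns each of its out-edges unmarked -> red -> blue, relaxing it on the way, and [Clean!]
   unmarks the edges again. After [n] passes [D] is sound (every finite estimate is the weight of
   a walk from [r]) and below the weight of every walk of at most [n] edges. After |V| - 1
   passes, if no negative cycle is reachable then [D] is the shortest-path distance and no edge
   can be improved; a reachable negative cycle on the other hand always leaves an improvable
   edge, since otherwise [D] would be a potential along it. [Final] raises the flag exactly when
   some edge is improvable. Every loop decreases a count of counter value, blue or grey nodes,
   or unmarked or blue edges, which gives termination. *)

(** * Total correctness of commands *)

Definition hoare (P : cmd) (Pre : graph -> Prop) (Post : graph -> outcome -> Prop) : Prop :=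
  forall H, Pre H -> terminates P H /\ forall o, exec P H o -> Post H o.

Lemma terminates_exec P H : terminates P H -> exists o, exec P H o.
Proof.
  induction 1 as [rs G|P Q G _ [[K|] hP] _ hQ|P G _ [[K|] hP] _ hL
                 |C P Q G _ [[K|] hC] _ hP _ hQ|C P Q G _ [[K|] hC] _ hP _ hQ|G|G].
  - destruct (classic (exists rl H', In rl rs /\ rule_app rl G H')) as [[rl [H' [hin happ]]]|hno].
    + exists (Res H'); eapply ex_call_ok; eauto.
    + exists Fail; apply ex_call_fail; intros rl H' hin happ; eauto.
  - destruct (hQ _ hP) as [o ho]; exists o; eapply ex_seq_ok; eauto.
  - exists Fail; apply ex_seq_fail; auto.
  - destruct (hL _ hP) as [o ho]; exists o; eapply ex_loop_step; eauto.
  - exists (Res G); apply ex_loop_stop; auto.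
  - destruct (hP _ hC) as [o ho]; exists o; eapply ex_try_then; eauto.
  - destruct (hQ hC) as [o ho]; exists o; eapply ex_try_else; eauto.
  - destruct (hP _ hC) as [o ho]; exists o; eapply ex_if_then; eauto.
  - destruct (hQ hC) as [o ho]; exists o; eapply ex_if_else; eauto.
  - exists Fail; constructor.
  - exists (Res G); constructor.
Qed.

Section HoareRules.
Implicit Types (Pre : graph -> Prop) (Post : graph -> outcome -> Prop).

Lemma hoare_call rs Pre Post :
  (forall H, Pre H -> forall rl H', In rl rs -> rule_app rl H H' -> Post H (Res H')) ->
  (forall H, Pre H -> (forall rl H', In rl rs -> ~ rule_app rl H H') -> Post H Fail) ->
  hoare (Call rs) Pre Post.
Proof.
  intros hok hfail H hH; split; [constructor|].
  intros o hx; inversion hx; subst; eauto.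
Qed.

Lemma hoare_call1 rl Pre Post :
  (forall H, Pre H -> forall H', rule_app rl H H' -> Post H (Res H')) ->
  (forall H, Pre H -> (forall H', ~ rule_app rl H H') -> Post H Fail) ->
  hoare (Call [rl]) Pre Post.
Proof.
  intros hok hfail; apply hoare_call.
  - intros H hH rl' H' [<-|[]]; auto.
  - intros H hH hno; apply hfail; auto. intros H'; apply hno; left; auto.
Qed.

Lemma hoare_seq P Q Pre M (Mid : graph -> Prop) N Post :
  hoare P Pre M -> hoare Q Mid N ->
  (forall H H1, Pre H -> M H (Res H1) -> Mid H1) ->
  (forall H, Pre H -> M H Fail -> Post H Fail) ->
  (forall H H1 o, Pre H -> M H (Res H1) -> N H1 o -> Post H o) ->
  hoare (Seq P Q) Pre Post.
Proof.
  intros hP hQ hmid hfail hok H hH; destruct (hP H hH) as [tP oP]; split.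
  - constructor; auto. intros H1 hx. apply hQ; eauto.
  - intros o hx; inversion hx; subst; eauto.
    eapply hok; eauto. apply hQ; eauto.
Qed.

Definition decreases (Inv : graph -> Prop) (m : graph -> nat) (Stop : graph -> Prop)
  (H : graph) (o : outcome) : Prop :=
  match o with Res H1 => Inv H1 /\ m H1 < m H | Fail => Stop H end.

Lemma hoare_loop P (Inv Stop : graph -> Prop) (m : graph -> nat) :
  hoare P Inv (decreases Inv m Stop) ->
  hoare (Loop P) Inv (fun _ o => exists H1, o = Res H1 /\ Inv H1 /\ Stop H1).
Proof.
  intros hP H hH; split.
  - remember (m H) as n. revert H hH Heqn. induction n as [n IH] using lt_wf_ind.
    intros H hH ->. destruct (hP H hH) as [tP oP]. constructor; auto.
    intros H1 hx. destruct (oP _ hx) as [hH1 hlt]. eapply IH; eauto.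
  - intros o hx. remember (Loop P) as L. revert HeqL hH.
    induction hx; intros hL hH; try discriminate; inversion hL; subst.
    + exists G. repeat split; auto. apply (proj2 (hP G hH) Fail). assumption.
    + apply IHhx2; auto. apply (proj2 (hP G hH) _ hx1).
Qed.

Lemma hoare_try C P Q Pre MC (PreP : graph -> Prop) NP NQ Post :
  hoare C Pre MC -> hoare P PreP NP ->
  hoare Q (fun H => Pre H /\ MC H Fail) NQ ->
  (forall H H1, Pre H -> MC H (Res H1) -> PreP H1) ->
  (forall H H1 o, Pre H -> MC H (Res H1) -> NP H1 o -> Post H o) ->
  (forall H o, Pre H -> MC H Fail -> NQ H o -> Post H o) ->
  hoare (Try C P Q) Pre Post.
Proof.
  intros hC hP hQ hmid hthen helse H hH; destruct (hC H hH) as [tC oC]; split.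
  - constructor; auto.
    + intros H1 hx. apply hP; eauto.
    + intros hx. apply hQ; auto.
  - intros o hx; inversion hx; subst.
    + eapply hthen; eauto. apply hP; eauto.
    + eapply helse; eauto. apply hQ; auto.
Qed.

Lemma hoare_if C P Q Pre MC NP NQ Post :
  hoare C Pre MC ->
  hoare P (fun H => Pre H /\ exists H1, MC H (Res H1)) NP ->
  hoare Q (fun H => Pre H /\ MC H Fail) NQ ->
  (forall H o, Pre H -> (exists H1, MC H (Res H1)) -> NP H o -> Post H o) ->
  (forall H o, Pre H -> MC H Fail -> NQ H o -> Post H o) ->
  hoare (If C P Q) Pre Post.
Proof.
  intros hC hP hQ hthen helse H hH; destruct (hC H hH) as [tC oC]; split.
  - constructor; auto.
    + intros H1 hx. apply hP; eauto.
    + intros hx. apply hQ; auto.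
  - intros o hx; inversion hx; subst.
    + eapply hthen; eauto. apply hP; eauto.
    + eapply helse; eauto. apply hQ; auto.
Qed.

Lemma hoare_skip Pre : hoare Skip Pre (fun H o => o = Res H).
Proof. intros H _; split; [constructor|]. intros o hx; inversion hx; auto. Qed.

Lemma hoare_fail Pre : hoare FailC Pre (fun _ o => o = Fail).
Proof. intros H _; split; [constructor|]. intros o hx; inversion hx; auto. Qed.

Lemma hoare_conseq P Pre Pre' Post Post' :
  hoare P Pre Post -> (forall H, Pre' H -> Pre H) ->
  (forall H o, Pre' H -> Post H o -> Post' H o) -> hoare P Pre' Post'.
Proof.
  intros hP hpre hpost H hH. destruct (hP H (hpre _ hH)) as [t o]. split; auto.
Qed.

End HoareRules.

Lemma length_filter_mono {A : Type} (f g : A -> bool) l :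
  (forall x, In x l -> g x = true -> f x = true) ->
  length (filter g l) <= length (filter f l).
Proof.
  induction l as [|a l IH]; intros h; simpl; auto.
  specialize (IH (fun x hx => h x (or_intror hx))).
  destruct (g a) eqn:ga.
  - rewrite (h a (or_introl eq_refl) ga). simpl; lia.
  - destruct (f a); simpl; lia.
Qed.

Lemma length_filter_lt {A : Type} (f g : A -> bool) l x :
  In x l -> f x = true -> g x = false ->
  (forall y, In y l -> g y = true -> f y = true) ->
  length (filter g l) < length (filter f l).
Proof.
  induction l as [|a l IH]; intros hi hf hg h; simpl in *; [tauto|].
  assert (h' : forall y, In y l -> g y = true -> f y = true) by auto.
  destruct hi as [<-|hi].
  - rewrite hf, hg. simpl. pose proof (length_filter_mono f g l h'). lia.
  - specialize (IH hi hf hg h'). destruct (g a) eqn:ga.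
    + rewrite (h a (or_introl eq_refl) ga). simpl; lia.
    + destruct (f a); simpl; lia.
Qed.

Lemma length_filter_remove_le (f : nat -> bool) l x :
  length (filter f (remove Nat.eq_dec x l)) <= length (filter f l).
Proof.
  induction l as [|a l IH]; simpl; auto.
  destruct (Nat.eq_dec x a); simpl; destruct (f a); simpl; lia.
Qed.

Lemma length_filter_remove_lt (f : nat -> bool) l x :
  In x l -> f x = true -> length (filter f (remove Nat.eq_dec x l)) < length (filter f l).
Proof.
  induction l as [|a l IH]; intros hi hf; simpl in *; [tauto|].
  destruct (Nat.eq_dec x a) as [<-|hne].
  - rewrite hf. simpl. pose proof (length_filter_remove_le f l x). lia.
  - destruct hi as [->|hi]; [congruence|]. specialize (IH hi hf).
    simpl. destruct (f a); simpl; lia.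
Qed.

Lemma length_filter_update {A : Type} (f g : A -> bool) l x :
  NoDup l -> In x l -> f x = true -> g x = false ->
  (forall y, In y l -> y <> x -> g y = f y) ->
  S (length (filter g l)) = length (filter f l).
Proof.
  induction l as [|a l IH]; intros hd hi hf hg h; simpl in *; [tauto|].
  inversion hd as [|? ? hal hdl]; subst. destruct hi as [<-|hi].
  - rewrite hf, hg. simpl. f_equal. f_equal. apply filter_ext_in.
    intros y hy. apply h; auto. intros ->; contradiction.
  - assert (hax : a <> x) by (intros ->; contradiction).
    rewrite (h a (or_introl eq_refl) hax). destruct (f a); simpl; rewrite IH; auto.
Qed.

Lemma filter_all_false {A : Type} (f : A -> bool) l :
  (forall x, In x l -> f x = false) -> filter f l = [].
Proof.
  induction l as [|a l IH]; intros h; simpl; auto.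
  rewrite (h a (or_introl eq_refl)). apply IH. intros x hx; apply h; right; auto.
Qed.

Lemma exists_fresh (l : list nat) : exists x, ~ In x l.
Proof.
  exists (S (list_max l)). intros h.
  assert (hle : Forall (fun k => k <= list_max l) l) by (apply list_max_le; auto).
  rewrite Forall_forall in hle. specialize (hle _ h). lia.
Qed.

Definition dist_atom (o : option Z) : atom :=
  match o with Some z => AInt z | None => AStr "f"%string end.

Lemma dist_atom_int a s : dist_atom a = AInt s -> a = Some s.
Proof. destruct a; simpl; congruence. Qed.

Lemma dist_atom_f a : dist_atom a = AStr "f"%string -> a = None.
Proof. destruct a; simpl; congruence. Qed.

Definition is_blue (m : nmark) : bool := match m with NBlue => true | _ => false end.
Definition is_grey (m : nmark) : bool := match m with NGrey => true | _ => false end.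
Definition is_unmarked (m : nmark) : bool := match m with NUnmarked => true | _ => false end.
Definition is_unmarked_edge (m : emark) : bool := match m with EUnmarked => true | _ => false end.
Definition is_blue_edge (m : emark) : bool := match m with EBlue => true | _ => false end.

Definition count_nodes (f : nmark -> bool) (H : graph) : nat :=
  length (filter (fun x => f (nmk H x)) (gV H)).
Definition count_edges (f : emark -> bool) (H : graph) : nat :=
  length (filter (fun e => f (emk H e)) (gE H)).

Notation blue_nodes := (count_nodes is_blue).
Notation grey_nodes := (count_nodes is_grey).
Notation unmarked_nodes := (count_nodes is_unmarked).
Notation unmarked_edges := (count_edges is_unmarked_edge).
Notation blue_edges := (count_edges is_blue_edge).

Lemma count_nodes_set_nmk_lt f H x m : In x (gV H) -> f (nmk H x) = true -> f m = false ->
  count_nodes f (set_nmk H x m) < count_nodes f H.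
Proof.
  intros hx h1 h2. unfold count_nodes. simpl.
  apply (length_filter_lt (fun y => f (nmk H y)) (fun y => f (upd (nmk H) x m y)) _ x hx h1).
  - unfold upd; rewrite Nat.eqb_refl; auto.
  - intros y _. unfold upd. destruct (Nat.eqb_spec y x); subst; auto; congruence.
Qed.

Lemma count_nodes_replace_lt f H x u l m b : In x (gV H) -> f (nmk H x) = true -> f m = false ->
  count_nodes f (add_node (del_node H x) u l m b) < count_nodes f H.
Proof.
  intros hx h1 h2. unfold count_nodes. simpl. unfold upd at 1. rewrite Nat.eqb_refl, h2.
  eapply Nat.le_lt_trans; [|apply (length_filter_remove_lt (fun y => f (nmk H y)) (gV H) x); auto].
  apply length_filter_mono. intros y _.
  unfold upd. destruct (Nat.eqb_spec y u); subst; auto; congruence.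
Qed.

Lemma count_edges_set_emk_lt f H e m : In e (gE H) -> f (emk H e) = true -> f m = false ->
  count_edges f (set_emk H e m) < count_edges f H.
Proof.
  intros hx h1 h2. unfold count_edges. simpl.
  apply (length_filter_lt (fun y => f (emk H y)) (fun y => f (upd (emk H) e m y)) _ e hx h1).
  - unfold upd; rewrite Nat.eqb_refl; auto.
  - intros y _. unfold upd. destruct (Nat.eqb_spec y e); subst; auto; congruence.
Qed.

Lemma count_edges_set_emk_le f H e m : f m = false ->
  count_edges f (set_emk H e m) <= count_edges f H.
Proof.
  intros h2. unfold count_edges. simpl. apply length_filter_mono.
  intros y _. unfold upd. destruct (Nat.eqb_spec y e); subst; auto; congruence.
Qed.

Definition inv_on (l : list nat) (phi : nat -> nat) (x : nat) : nat :=
  match find (fun v => Nat.eqb (phi v) x) l with Some v => v | None => x end.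

Lemma inv_on_spec l phi x : (exists v, In v l /\ phi v = x) ->
  In (inv_on l phi x) l /\ phi (inv_on l phi x) = x.
Proof.
  intros [v [hv hx]]. unfold inv_on.
  destruct (find (fun v => Nat.eqb (phi v) x) l) as [w|] eqn:hf.
  - apply find_some in hf. destruct hf as [h1 h2]. apply Nat.eqb_eq in h2. auto.
  - exfalso. pose proof (find_none _ _ hf v hv) as h. simpl in h. apply Nat.eqb_neq in h. auto.
Qed.

Lemma inv_on_apply l phi v : In v l ->
  (forall v w, In v l -> In w l -> phi v = phi w -> v = w) -> inv_on l phi (phi v) = v.
Proof.
  intros hv hinj. destruct (inv_on_spec l phi (phi v)) as [h1 h2]; eauto.
Qed.

Open Scope Z_scope.

(** * Walks, simple paths and negative cycles *)

Section Walks.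
Variable G : graph.

Lemma walk_app u p q w :
  walk G u (p ++ q) w <-> exists v, walk G u p v /\ walk G v q w.
Proof.
  revert u; induction p as [|e p IH]; intros u; simpl.
  - split; [intros h; exists u; auto|intros [v [-> h]]; auto].
  - split.
    + intros [he [hs hw]]. apply IH in hw. destruct hw as [v [h1 h2]]. eauto.
    + intros [v [[he [hs hw]] h2]]. repeat split; auto. apply IH; eauto.
Qed.

Lemma walk_snoc u p e : walk G u p (src G e) -> In e (gE G) -> walk G u (p ++ [e]) (tgt G e).
Proof. intros hp he. apply walk_app. exists (src G e). simpl; auto. Qed.

Lemma weight_app p q : weight G (p ++ q) = weight G p + weight G q.
Proof. induction p; simpl; [lia|]. rewrite IHp; lia. Qed.

Lemma walk_in_gE u p v e : walk G u p v -> In e p -> In e (gE G).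
Proof.
  revert u; induction p as [|a p IH]; intros u h hi; simpl in *; [tauto|].
  destruct h as [h1 [h2 h3]]. destruct hi as [<-|hi]; eauto.
Qed.

Lemma walk_split_edge u p v e : walk G u p v -> In e p ->
  exists p1 p2, p = p1 ++ e :: p2 /\ walk G u p1 (src G e) /\ walk G (tgt G e) p2 v.
Proof.
  intros h hi. destruct (in_split _ _ hi) as [p1 [p2 ->]].
  apply walk_app in h. destruct h as [x [h1 [_ [<- h2]]]]. eauto.
Qed.

Lemma walk_split_at u p v x : walk G u p v -> In x (map (tgt G) p) ->
  exists p1 p2, p = p1 ++ p2 /\ p1 <> [] /\ walk G u p1 x /\ walk G x p2 v.
Proof.
  revert u; induction p as [|e p IH]; intros u h hi; simpl in *; [tauto|].
  destruct h as [he [hs hw]]. destruct hi as [<-|hi].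
  - exists [e], p. simpl. repeat split; auto. discriminate.
  - destruct (IH _ hw hi) as [p1 [p2 [-> [hn [w1 w2]]]]].
    exists (e :: p1), p2. simpl. repeat split; auto. discriminate.
Qed.

Lemma walk_closed_subwalk u p v : walk G u p v -> ~ NoDup (u :: map (tgt G) p) ->
  exists p1 p2 p3 x, p = p1 ++ p2 ++ p3 /\ p2 <> [] /\ walk G u p1 x /\
    walk G x p2 x /\ walk G x p3 v.
Proof.
  revert u; induction p as [|e p IH]; intros u h hn.
  - exfalso; apply hn; constructor; [simpl; tauto|constructor].
  - destruct (classic (In u (map (tgt G) (e :: p)))) as [hi|hi].
    + destruct (walk_split_at u (e :: p) v u h hi) as [p2 [p3 [eq [hn2 [w1 w2]]]]].
      exists [], p2, p3, u. simpl. repeat split; auto.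
    + destruct h as [he [hs hw]].
      assert (hn' : ~ NoDup (tgt G e :: map (tgt G) p)) by (intros hd; apply hn; constructor; auto).
      destruct (IH _ hw hn') as [p1 [p2 [p3 [x [-> [hne [w1 [w2 w3]]]]]]]].
      exists (e :: p1), p2, p3, x. simpl. repeat split; auto.
Qed.

Lemma walk_to_dpath u p v : walk G u p v -> exists q, dpath G u q v.
Proof.
  remember (length p) as n. revert p Heqn. induction n as [n IH] using lt_wf_ind.
  intros p -> h. destruct (classic (NoDup (u :: map (tgt G) p))) as [hd|hd].
  - exists p. split; auto.
  - destruct (walk_closed_subwalk u p v h hd) as [p1 [p2 [p3 [x [-> [hne [w1 [w2 w3]]]]]]]].
    apply (IH (length (p1 ++ p3))) with (p := p1 ++ p3); auto.
    + rewrite !length_app. destruct p2; [congruence|simpl]. lia.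
    + apply walk_app; eauto.
Qed.

(* A closed walk of negative weight splits at a repeated vertex into two shorter
   closed walks, one of which still has negative weight. *)
Lemma neg_closed_walk_reachable r x p q :
  walk G x p x -> p <> [] -> weight G p < 0 -> walk G r q x -> neg_cycle_reachable G r.
Proof.
  remember (length p) as n. revert x p q Heqn. induction n as [n IH] using lt_wf_ind.
  intros x p q -> hw hne hwt hq.
  destruct (classic (NoDup (map (tgt G) p))) as [hd|hd].
  - destruct (walk_to_dpath r q x hq) as [q' hq']. exists x, p. repeat split; auto. exists q'; auto.
  - destruct p as [|e p']; [congruence|]. destruct hw as [he [hs hw]].
    destruct (walk_closed_subwalk (tgt G e) p' x hw hd)
      as (p1 & p2 & p3 & y & -> & hne2 & w1 & w2 & w3).
    simpl in hwt. rewrite !weight_app in hwt.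
    assert (hl2 : (0 < length p2)%nat) by (destruct p2; [congruence|simpl; lia]).
    destruct (Z_lt_ge_dec (weight G p2) 0) as [hn2|hn2].
    + apply (IH (length p2)) with (x := y) (p := p2) (q := q ++ e :: p1); auto.
      * simpl. rewrite !length_app. lia.
      * apply walk_app. exists x. simpl; auto.
    + apply (IH (length (e :: p1 ++ p3))) with (x := x) (p := e :: p1 ++ p3) (q := q); auto.
      * simpl. rewrite !length_app. lia.
      * simpl. repeat split; auto. apply walk_app; eauto.
      * discriminate.
      * simpl. rewrite weight_app. lia.
Qed.

Lemma walk_to_dpath_le r p v : ~ neg_cycle_reachable G r -> walk G r p v ->
  exists q, dpath G r q v /\ weight G q <= weight G p.
Proof.
  intros hneg. remember (length p) as n. revert p Heqn. induction n as [n IH] using lt_wf_ind.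
  intros p -> h. destruct (classic (NoDup (r :: map (tgt G) p))) as [hd|hd].
  - exists p. split; [split|]; auto; lia.
  - destruct (walk_closed_subwalk r p v h hd) as [p1 [p2 [p3 [x [-> [hne [w1 [w2 w3]]]]]]]].
    destruct (Z_lt_ge_dec (weight G p2) 0) as [hn2|hn2].
    + exfalso. apply hneg. apply (neg_closed_walk_reachable r x p2 p1); auto.
    + destruct (IH (length (p1 ++ p3))) with (p := p1 ++ p3) as [q [hq hqw]]; auto.
      * rewrite !length_app. destruct p2; [congruence|simpl]. lia.
      * apply walk_app; eauto.
      * exists q. split; auto. rewrite !weight_app in *. lia.
Qed.

Lemma walk_potential (d : nat -> Z) u p v : walk G u p v ->
  (forall e, In e p -> d (tgt G e) <= d (src G e) + ew G e) -> d v <= d u + weight G p.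
Proof.
  revert u; induction p as [|e p IH]; intros u h hd; simpl in *.
  - subst; lia.
  - destruct h as [_ [<- hw]]. specialize (IH _ hw (fun e' hi => hd e' (or_intror hi))).
    specialize (hd e (or_introl eq_refl)). lia.
Qed.

Lemma dpath_length u q v : wf G -> In u (gV G) -> dpath G u q v ->
  (length q <= length (gV G) - 1)%nat.
Proof.
  intros [_ [_ hwf]] hu [hw hd].
  assert (hincl : incl (u :: map (tgt G) q) (gV G)).
  { intros x [<-|hx]; auto. apply in_map_iff in hx. destruct hx as [e [<- he]].
    apply hwf. eapply walk_in_gE; eauto. }
  pose proof (NoDup_incl_length hd hincl) as hlen. simpl in hlen.
  rewrite length_map in hlen. lia.
Qed.

End Walks.

(** * Bellman-Ford estimates *)

(* Distance estimates are [option Z], with [None] standing for "+infinity",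
   the label "f" of the program. *)
Definition ole (a b : option Z) : Prop :=
  match b with
  | None => True
  | Some y => match a with Some x => x <= y | None => False end
  end.

Definition oadd (a : option Z) (w : Z) : option Z :=
  match a with Some s => Some (s + w) | None => None end.

Lemma ole_refl a : ole a a.
Proof. destruct a; simpl; auto; lia. Qed.

Lemma ole_trans a b d : ole a b -> ole b d -> ole a d.
Proof. destruct a, b, d; simpl; auto; try tauto; lia. Qed.

Section Estimates.
Variables (G : graph) (r : nat).

Definition dist_sound (D : nat -> option Z) : Prop :=
  forall v d, In v (gV G) -> D v = Some d -> exists p, walk G r p v /\ weight G p = d.

Definition dist_bounded (D : nat -> option Z) (n : nat) : Prop :=
  forall v p, walk G r p v -> (length p <= n)%nat -> ole (D v) (Some (weight G p)).

(* Relaxation is measured against the estimates [D0] of the previous pass; the in-place updates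
   of the program can only lower the source estimate further. *)
Definition relaxed (D0 D : nat -> option Z) (e : nat) : Prop :=
  ole (D (tgt G e)) (oadd (D0 (src G e)) (ew G e)).

Definition improvable (D : nat -> option Z) (e : nat) : Prop :=
  exists s t, D (src G e) = Some s /\ D (tgt G e) = Some t /\ s + ew G e < t.

Definition has_improvable_edge (D : nat -> option Z) : Prop :=
  exists e, In e (gE G) /\ improvable D e.

Lemma dist_bounded_relax D0 D n : dist_bounded D0 n ->
  (forall e, In e (gE G) -> relaxed D0 D e) ->
  (forall v, In v (gV G) -> ole (D v) (D0 v)) -> In r (gV G) ->
  dist_bounded D (S n).
Proof.
  intros hb hrel hle hr v p hw hlen.
  destruct p as [|e p _] using rev_ind.
  - simpl in hw. subst v. eapply ole_trans; [apply hle; auto|]. apply (hb r []); simpl; auto; lia.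
  - apply walk_app in hw. destruct hw as [x [hw1 [he [<- <-]]]].
    rewrite length_app in hlen. simpl in hlen.
    pose proof (hb (src G e) p hw1 ltac:(lia)) as h1.
    pose proof (hrel e he) as h2. unfold relaxed in h2.
    rewrite weight_app. simpl.
    destruct (D0 (src G e)) as [s0|], (D (tgt G e)); simpl in *; try tauto; lia.
Qed.

Hypotheses (Hwf : wf G) (Hr : In r (gV G)).

Let bounded_dpath D v q : dist_bounded D (length (gV G) - 1) -> dpath G r q v ->
  ole (D v) (Some (weight G q)).
Proof. intros hb hq. apply hb; [apply hq|]. eapply dpath_length; eauto. Qed.

Lemma dist_no_improvable D : ~ neg_cycle_reachable G r -> dist_sound D ->
  dist_bounded D (length (gV G) - 1) -> ~ has_improvable_edge D.
Proof.
  intros hneg hs hb [e [he [s [t [h1 [h2 hlt]]]]]].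
  destruct Hwf as [_ [_ hends]]. destruct (hends e he) as [hsrc _].
  destruct (hs (src G e) s hsrc h1) as [p [hp hw]].
  destruct (walk_to_dpath_le G r _ _ hneg (walk_snoc G r p e hp he)) as [q [hq hqw]].
  pose proof (bounded_dpath D _ q hb hq) as h. rewrite h2 in h. simpl in h.
  rewrite weight_app in hqw. simpl in hqw. lia.
Qed.

Lemma dist_min_dist D v : ~ neg_cycle_reachable G r -> dist_sound D ->
  dist_bounded D (length (gV G) - 1) -> In v (gV G) -> reachable G r v ->
  exists d, D v = Some d /\ min_dist G r v d.
Proof.
  intros hneg hs hb hv [q hq].
  pose proof (bounded_dpath D v q hb hq) as h.
  destruct (D v) as [d|] eqn:hd; [|simpl in h; tauto].
  exists d. split; auto. split.
  - destruct (hs v d hv hd) as [p [hp <-]].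
    destruct (walk_to_dpath_le G r _ _ hneg hp) as [q' [hq' hqw]].
    pose proof (bounded_dpath D v q' hb hq') as h'. rewrite hd in h'. simpl in h'.
    exists q'. split; auto. lia.
  - intros es hes. pose proof (bounded_dpath D v es hb hes) as h'. rewrite hd in h'. auto.
Qed.

Lemma dist_unreachable D v : dist_sound D -> In v (gV G) -> ~ reachable G r v -> D v = None.
Proof.
  intros hs hv hnr. destruct (D v) as [d|] eqn:hd; auto. exfalso.
  destruct (hs v d hv hd) as [p [hp _]]. apply hnr. eapply walk_to_dpath; eauto.
Qed.

(* If no edge is improvable, D is a finite potential along every reachable
   cycle, so the cycle's weight is nonnegative. *)
Lemma neg_cycle_improvable D : neg_cycle_reachable G r ->
  dist_bounded D (length (gV G) - 1) -> has_improvable_edge D.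
Proof.
  intros [u [cyc [[hne [hw hnd]] [hwt [q hq]]]]] hb.
  apply NNPP. intros hno.
  assert (hfin : forall x p, walk G r p x -> exists z, D x = Some z).
  { intros x p hp. destruct (walk_to_dpath G r p x hp) as [q' hq'].
    pose proof (bounded_dpath D x q' hb hq') as h'.
    destruct (D x); simpl in h'; [eauto|tauto]. }
  set (dz := fun v => match D v with Some z => z | None => 0 end).
  assert (hpot : forall e, In e cyc -> dz (tgt G e) <= dz (src G e) + ew G e).
  { intros e hin. destruct (walk_split_edge G u cyc u e hw hin) as [p1 [p2 [-> [h1 h2]]]].
    assert (he : In e (gE G)) by exact (walk_in_gE G u _ u e hw hin).
    assert (w1 : walk G r (q ++ p1) (src G e)) by (apply walk_app; exists u; split; auto; apply hq).
    destruct (hfin _ _ w1) as [s hs1].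
    destruct (hfin _ _ (walk_snoc G r _ e w1 he)) as [t ht1].
    unfold dz. rewrite hs1, ht1.
    destruct (Z_lt_ge_dec (s + ew G e) t) as [hlt|hge]; [|lia].
    exfalso. apply hno. exists e. split; auto. exists s, t. auto. }
  pose proof (walk_potential G dz u cyc u hw hpot). lia.
Qed.

End Estimates.

(** * Simulation of bellman-ford *)

Section Simulation.
Variables (G : graph) (r : nat).
Hypothesis Hwf : wf G.
Hypothesis Hgrey : forall v, In v (gV G) -> nmk G v = NGrey.
Hypothesis Hr : In r (gV G).
Hypothesis Hrr : nroot G r = true.
Hypothesis Hroot : forall v, In v (gV G) -> nroot G v = true -> v = r.
Hypothesis Hedges : forall e, In e (gE G) -> emk G e = EUnmarked /\ exists w, elab G e = [AInt w].
Hypothesis Hnl : forall e, In e (gE G) -> src G e <> tgt G e.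

Lemma elab_ew e : In e (gE G) -> elab G e = [AInt (ew G e)].
Proof. intros he. destruct (Hedges e he) as [_ [w hw]]. unfold ew. rewrite hw. auto. Qed.

(* The root and the endpoints of edges can never be deleted by [no_deg]; every other node may be
   re-created under a fresh identifier, so the working graph is related to [G] by an injection
   [phi] that fixes anchored nodes. *)
Definition anchored v := v = r \/ exists e, In e (gE G) /\ (src G e = v \/ tgt G e = v).

Lemma src_in_gV e : In e (gE G) -> In (src G e) (gV G).
Proof. intros h. destruct Hwf as [_ [_ hw]]. apply hw; auto. Qed.
Lemma tgt_in_gV e : In e (gE G) -> In (tgt G e) (gV G).
Proof. intros h. destruct Hwf as [_ [_ hw]]. apply hw; auto. Qed.
Lemma anchored_src e : In e (gE G) -> anchored (src G e).
Proof. intros h; right; eauto. Qed.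
Lemma anchored_tgt e : In e (gE G) -> anchored (tgt G e).
Proof. intros h; right; eauto. Qed.
Lemma anchored_root : anchored r.
Proof. left; auto. Qed.

Definition bf_graph (D : nat -> option Z) : graph :=
  mkGraph (gV G) (gE G) (fun v => nlab G v ++ [dist_atom (D v)]) (fun _ => NGrey)
    (fun v => Nat.eqb v r) (src G) (tgt G) (elab G) (fun _ => EBlue).

Lemma bf_graph_result D : ~ neg_cycle_reachable G r -> dist_sound G r D ->
  dist_bounded G r D (length (gV G) - 1) -> bf_result G r (bf_graph D).
Proof.
  intros hneg hs hb. unfold bf_result. simpl. repeat split; auto.
  - symmetry; apply Hgrey; auto.
  - destruct (Nat.eqb_spec v r) as [->|hne]; [rewrite Hrr; auto|].
    destruct (nroot G v) eqn:e; [exfalso; apply hne; apply Hroot; auto|auto].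
  - intros hr. destruct (dist_min_dist G r Hwf Hr D v hneg hs hb H hr) as [d [hd hm]].
    exists d. rewrite hd. auto.
  - intros hr. rewrite (dist_unreachable G r D v hs H hr). auto.
Qed.

Section Counter.
(* the counter node and the dashed edge created by [set_counter] *)
Variables c e0 : nat.
Hypothesis Hc : ~ In c (gV G).
Hypothesis He0 : ~ In e0 (gE G).

Lemma edge_ne_e0 e : In e (gE G) -> e <> e0.
Proof. intros h ->; contradiction. Qed.

Record Encodes (H : graph) (phi : nat -> nat) (D : nat -> option Z) (k : Z) : Prop := {
  enc_edges : gE H = e0 :: gE G;
  enc_src : src H = upd (src G) e0 c;
  enc_tgt : tgt H = upd (tgt G) e0 r;
  enc_elab : elab H = upd (elab G) e0 [];
  enc_dash : emk H e0 = EDashed;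
  enc_c_in : In c (gV H);
  enc_c_lab : nlab H c = [AInt k];
  enc_c_green : nmk H c = NGreen;
  enc_in : forall v, In v (gV G) -> In (phi v) (gV H);
  enc_ne_c : forall v, In v (gV G) -> phi v <> c;
  enc_lab : forall v, In v (gV G) -> nlab H (phi v) = nlab G v ++ [dist_atom (D v)];
  enc_not_green : forall v, In v (gV G) -> nmk H (phi v) <> NGreen;
  enc_inj : forall v w, In v (gV G) -> In w (gV G) -> phi v = phi w -> v = w;
  enc_cov : forall x, In x (gV H) -> x = c \/ exists v, In v (gV G) /\ phi v = x;
  enc_fix : forall v, In v (gV G) -> anchored v -> phi v = v }.
Arguments enc_edges {H phi D k}. Arguments enc_src {H phi D k}. Arguments enc_tgt {H phi D k}.
Arguments enc_elab {H phi D k}. Arguments enc_dash {H phi D k}. Arguments enc_c_in {H phi D k}.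
Arguments enc_c_lab {H phi D k}. Arguments enc_c_green {H phi D k}.
Arguments enc_in {H phi D k}. Arguments enc_ne_c {H phi D k}. Arguments enc_lab {H phi D k}.
Arguments enc_not_green {H phi D k}. Arguments enc_inj {H phi D k}. Arguments enc_cov {H phi D k}.
Arguments enc_fix {H phi D k}.

Section EncodesFacts.
Context {H : graph} {phi : nat -> nat} {D : nat -> option Z} {k : Z} (S : Encodes H phi D k).

Lemma enc_upd {A : Type} (f : nat -> A) v w a : In v (gV G) -> In w (gV G) ->
  upd f (phi v) a (phi w) = if Nat.eqb w v then a else f (phi w).
Proof.
  intros hv hw. unfold upd. destruct (Nat.eqb_spec (phi w) (phi v)) as [h|h];
  destruct (Nat.eqb_spec w v) as [h'|h']; subst; auto.
  - exfalso; apply h'. apply (enc_inj S); auto.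
  - congruence.
Qed.

Lemma enc_upd_c {A : Type} (f : nat -> A) v a : In v (gV G) -> upd f c a (phi v) = f (phi v).
Proof.
  intros hv. unfold upd. destruct (Nat.eqb_spec (phi v) c) as [h|h]; auto.
  exfalso; apply (enc_ne_c S v hv h).
Qed.

Lemma enc_fix_src e : In e (gE G) -> phi (src G e) = src G e.
Proof. intros h. apply (enc_fix S). apply src_in_gV; auto. apply anchored_src; auto. Qed.
Lemma enc_fix_tgt e : In e (gE G) -> phi (tgt G e) = tgt G e.
Proof. intros h. apply (enc_fix S). apply tgt_in_gV; auto. apply anchored_tgt; auto. Qed.
Lemma enc_fix_root : phi r = r.
Proof. apply (enc_fix S); auto. apply anchored_root. Qed.

Lemma enc_src_edge e : In e (gE G) -> src H e = phi (src G e).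
Proof.
  intros h. rewrite (enc_src S), enc_fix_src; auto. unfold upd.
  destruct (Nat.eqb_spec e e0); auto. exfalso; apply (edge_ne_e0 e); auto.
Qed.
Lemma enc_tgt_edge e : In e (gE G) -> tgt H e = phi (tgt G e).
Proof.
  intros h. rewrite (enc_tgt S), enc_fix_tgt; auto. unfold upd.
  destruct (Nat.eqb_spec e e0); auto. exfalso; apply (edge_ne_e0 e); auto.
Qed.
Lemma enc_elab_edge e : In e (gE G) -> elab H e = elab G e.
Proof.
  intros h. rewrite (enc_elab S). unfold upd.
  destruct (Nat.eqb_spec e e0); auto. exfalso; apply (edge_ne_e0 e); auto.
Qed.

Lemma enc_node_of x : In x (gV H) -> nmk H x <> NGreen -> exists v, In v (gV G) /\ x = phi v.
Proof.
  intros hx hg. destruct (enc_cov S x hx) as [->|[v [hv <-]]].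
  - exfalso; apply hg; apply (enc_c_green S).
  - eauto.
Qed.

Lemma enc_edge_of e : In e (gE H) -> emk H e <> EDashed -> In e (gE G).
Proof.
  intros he hd. rewrite (enc_edges S) in he. destruct he as [<-|he]; auto.
  exfalso; apply hd; apply (enc_dash S).
Qed.

Lemma enc_phi_src_ne e : In e (gE G) -> phi (src G e) <> phi (tgt G e).
Proof. intros h. rewrite enc_fix_src, enc_fix_tgt; auto. Qed.

Lemma enc_dist_int v s xs : In v (gV G) -> nlab H (phi v) = xs ++ [AInt s] -> D v = Some s.
Proof.
  intros hv h. rewrite (enc_lab S v hv) in h. apply app_inj_tail in h. destruct h as [_ h].
  apply dist_atom_int; auto.
Qed.
Lemma enc_dist_f v ys : In v (gV G) -> nlab H (phi v) = ys ++ [AStr "f"%string] ->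
  D v = None /\ ys = nlab G v.
Proof.
  intros hv h. rewrite (enc_lab S v hv) in h. apply app_inj_tail in h. destruct h as [h1 h].
  split; auto. apply dist_atom_f; auto.
Qed.
Lemma enc_dist_int_label v ys t : In v (gV G) -> nlab H (phi v) = ys ++ [AInt t] ->
  D v = Some t /\ ys = nlab G v.
Proof.
  intros hv h. rewrite (enc_lab S v hv) in h. apply app_inj_tail in h. destruct h as [h1 h].
  split; auto. apply dist_atom_int; auto.
Qed.

Lemma enc_counter_val i : nlab H c = [AInt i] -> i = k.
Proof. rewrite (enc_c_lab S). congruence. Qed.

Lemma enc_set_nroot x b : Encodes (set_nroot H x b) phi D k.
Proof. destruct S; constructor; auto. Qed.

Lemma enc_set_nmk x m : x <> c -> m <> NGreen -> Encodes (set_nmk H x m) phi D k.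
Proof.
  intros hx hm. destruct S; constructor; simpl; auto.
  - unfold upd. destruct (Nat.eqb_spec c x); congruence.
  - intros v hv. unfold upd. destruct (Nat.eqb_spec (phi v) x); auto.
Qed.

Lemma enc_set_emk e m : e <> e0 -> Encodes (set_emk H e m) phi D k.
Proof.
  intros he. destruct S; constructor; simpl; auto.
  unfold upd. destruct (Nat.eqb_spec e0 e); congruence.
Qed.

Lemma enc_set_dist v a : In v (gV G) ->
  Encodes (set_nlab H (phi v) (nlab G v ++ [dist_atom a])) phi (upd D v a) k.
Proof.
  intros hv. pose proof (enc_ne_c S v hv) as hnc.
  destruct S; constructor; simpl; auto.
  - unfold upd. destruct (Nat.eqb_spec c (phi v)); congruence.
  - intros w hw. rewrite enc_upd; auto. unfold upd. destruct (Nat.eqb_spec w v); subst; auto.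
Qed.

Lemma enc_set_counter k' : Encodes (set_nlab H c [AInt k']) phi D k'.
Proof.
  destruct S; constructor; simpl; auto.
  - unfold upd. rewrite Nat.eqb_refl. auto.
  - intros w hw. rewrite enc_upd_c; auto.
Qed.

Lemma enc_upd_replace {A : Type} (f : nat -> A) v u a w : In v (gV G) -> In w (gV G) ->
  ~ In u (remove Nat.eq_dec (phi v) (gV H)) ->
  upd f u a (upd phi v u w) = if Nat.eqb w v then a else f (phi w).
Proof.
  intros hv hw hu. unfold upd at 2. destruct (Nat.eqb_spec w v) as [->|hne].
  - unfold upd. rewrite Nat.eqb_refl; auto.
  - unfold upd. destruct (Nat.eqb_spec (phi w) u) as [<-|]; auto. exfalso. apply hu.
    apply in_in_remove; [|apply (enc_in S); auto]. intros h. apply hne. apply (enc_inj S); auto.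
Qed.

Lemma enc_replace_node v u : In v (gV G) -> ~ anchored v ->
  ~ In u (remove Nat.eq_dec (phi v) (gV H)) ->
  Encodes (add_node (del_node H (phi v)) u (nlab H (phi v)) NUnmarked false) (upd phi v u) D k.
Proof.
  intros hv hf hu.
  assert (hcin : In c (remove Nat.eq_dec (phi v) (gV H))).
  { apply in_in_remove; [|apply (enc_c_in S)]. intros h. apply (enc_ne_c S v hv); auto. }
  assert (huc : u <> c) by (intros ->; contradiction).
  assert (hw' : forall w, In w (gV G) -> w <> v -> In (phi w) (remove Nat.eq_dec (phi v) (gV H))).
  { intros w hw hwv. apply in_in_remove; [|apply (enc_in S); auto].
    intros h. apply hwv. apply (enc_inj S); auto. }
  assert (hwu : forall w, In w (gV G) -> w <> v -> phi w <> u).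
  { intros w hw hwv h. apply hu. rewrite <- h. auto. }
  destruct S; constructor; simpl; auto.
  - unfold upd. destruct (Nat.eqb_spec c u); congruence.
  - unfold upd. destruct (Nat.eqb_spec c u); congruence.
  - intros w hw. unfold upd. destruct (Nat.eqb_spec w v); [left; auto|right; auto].
  - intros w hw. unfold upd. destruct (Nat.eqb_spec w v); auto.
  - intros w hw. unfold upd at 2. destruct (Nat.eqb_spec w v) as [->|hne].
    + unfold upd. rewrite Nat.eqb_refl. auto.
    + unfold upd. destruct (Nat.eqb_spec (phi w) u); [exfalso; eapply hwu; eauto|auto].
  - intros w hw. unfold upd at 2. destruct (Nat.eqb_spec w v) as [->|hne].
    + unfold upd. rewrite Nat.eqb_refl. discriminate.
    + unfold upd. destruct (Nat.eqb_spec (phi w) u); [exfalso; eapply hwu; eauto|auto].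
  - intros w1 w2 hw1 hw2. unfold upd.
    destruct (Nat.eqb_spec w1 v) as [->|h1]; destruct (Nat.eqb_spec w2 v) as [->|h2]; auto.
    + intros h. exfalso. apply (hwu w2); auto.
    + intros h. exfalso. apply (hwu w1); auto.
  - intros x [<-|hx].
    + right. exists v. split; auto. unfold upd. rewrite Nat.eqb_refl; auto.
    + apply in_remove in hx. destruct hx as [hx hxv].
      destruct (enc_cov0 x hx) as [->|[w [hw <-]]]; [left; auto|right].
      exists w. split; auto. unfold upd. destruct (Nat.eqb_spec w v); subst; [congruence|auto].
  - intros w hw hfw. unfold upd. destruct (Nat.eqb_spec w v); subst; [contradiction|auto].
Qed.

End EncodesFacts.

(* [ro] is the node currently made root by [root1] or [root2], if any. *)
Record Inv (k : Z) (H : graph) (phi : nat -> nat) (D : nat -> option Z) (ro : option nat) :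
  Prop := {
  inv_enc : Encodes H phi D k;
  inv_nmk : forall v, In v (gV G) ->
    nmk H (phi v) = NUnmarked \/ nmk H (phi v) = NBlue \/ nmk H (phi v) = NGrey;
  inv_anchored : forall v, In v (gV G) -> anchored v ->
    nmk H (phi v) = NBlue \/ nmk H (phi v) = NGrey;
  inv_root : forall v, In v (gV G) -> (nroot H (phi v) = true <-> ro = Some v);
  inv_cur : forall u, ro = Some u -> In u (gV G) /\ nmk H (phi u) = NBlue;
  inv_grey_blue : forall e, In e (gE G) -> nmk H (phi (src G e)) = NGrey -> emk H e = EBlue;
  inv_blue_unmarked : forall e, In e (gE G) -> nmk H (phi (src G e)) = NBlue ->
    ro <> Some (src G e) -> emk H e = EUnmarked;
  inv_emk : forall e, In e (gE G) -> emk H e = EUnmarked \/ emk H e = ERed \/ emk H e = EBlue;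
  inv_red_cur : forall e, In e (gE G) -> emk H e = ERed -> ro = Some (src G e);
  inv_red_unique : forall e e', In e (gE G) -> In e' (gE G) ->
    emk H e = ERed -> emk H e' = ERed -> e = e' }.
Arguments inv_enc {k H phi D ro}. Arguments inv_nmk {k H phi D ro}.
Arguments inv_anchored {k H phi D ro}. Arguments inv_root {k H phi D ro}.
Arguments inv_cur {k H phi D ro}. Arguments inv_grey_blue {k H phi D ro}.
Arguments inv_blue_unmarked {k H phi D ro}. Arguments inv_emk {k H phi D ro}.
Arguments inv_red_cur {k H phi D ro}. Arguments inv_red_unique {k H phi D ro}.

Definition no_red_edge (H : graph) := forall e, In e (gE G) -> emk H e <> ERed.

Lemma inv_no_red k H phi D : Inv k H phi D None -> no_red_edge H.
Proof. intros B e he hr. pose proof (inv_red_cur B e he hr). discriminate. Qed.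

Lemma inv_set_dist k H phi D ro v a : Inv k H phi D ro -> In v (gV G) ->
  Inv k (set_nlab H (phi v) (nlab G v ++ [dist_atom a])) phi (upd D v a) ro.
Proof.
  intros B hv. destruct B; constructor; simpl; auto. apply enc_set_dist; auto.
Qed.

Lemma inv_set_counter k H phi D ro k' :
  Inv k H phi D ro -> Inv k' (set_nlab H c [AInt k']) phi D ro.
Proof.
  intros B. destruct B; constructor; simpl; auto. eapply enc_set_counter; eauto.
Qed.

Ltac enc_simpl S := repeat rewrite (enc_upd S) by auto using src_in_gV, tgt_in_gV.

Lemma step_root1 k H phi D H' : Inv k H phi D None -> rule_app r_root1 H H' ->
  exists v, In v (gV G) /\ nmk H (phi v) = NBlue /\ H' = set_nroot H (phi v) true /\
    Inv k H' phi D (Some v).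
Proof.
  intros B [x [hx [hb ->]]]. pose proof (inv_enc B) as S.
  destruct (enc_node_of S x hx) as [v [hv ->]]; [congruence|].
  exists v. split; auto. split; auto. split; auto.
  destruct B; constructor; simpl; auto.
  - apply enc_set_nroot; auto.
  - intros w hw. enc_simpl S. destruct (Nat.eqb_spec w v); subst; [split; auto|].
    rewrite inv_root0; auto. split; congruence.
  - intros u hu; inversion hu; subst; auto.
  - intros e he hbl hro. apply inv_blue_unmarked0; auto. discriminate.
  - intros e he hr. pose proof (inv_red_cur0 e he hr). discriminate.
Qed.

Lemma step_unroot1 k H phi D u H' : Inv k H phi D (Some u) ->
  (forall e, In e (gE G) -> src G e = u -> emk H e = EBlue) -> rule_app r_unroot1 H H' ->
  H' = set_nroot (set_nmk H (phi u) NGrey) (phi u) false /\ Inv k H' phi D None.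
Proof.
  intros B hall [x [hx [hb [hrt ->]]]]. pose proof (inv_enc B) as S.
  destruct (enc_node_of S x hx) as [v [hv ->]]; [congruence|].
  assert (v = u). { apply (inv_root B v hv) in hrt. congruence. }
  subst v. split; auto.
  destruct B; constructor; simpl; auto.
  - apply enc_set_nroot, enc_set_nmk; [auto|apply (enc_ne_c S); auto|discriminate].
  - intros w hw. enc_simpl S. destruct (Nat.eqb_spec w u); subst; auto.
  - intros w hw hf. enc_simpl S. destruct (Nat.eqb_spec w u); subst; auto.
  - intros w hw. enc_simpl S. destruct (Nat.eqb_spec w u); subst; [split; discriminate|].
    rewrite inv_root0; auto. split; congruence.
  - intros w hw; discriminate.
  - intros e he. assert (In (src G e) (gV G)) by (apply src_in_gV; auto). enc_simpl S.
    destruct (Nat.eqb_spec (src G e) u); subst; auto.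
  - intros e he. assert (In (src G e) (gV G)) by (apply src_in_gV; auto). enc_simpl S.
    destruct (Nat.eqb_spec (src G e) u); subst; [discriminate|]. intros hbl _.
    apply inv_blue_unmarked0; auto.
    congruence.
  - intros e he hr. exfalso. pose proof (inv_red_cur0 e he hr). inversion H0.
    rewrite (hall e he) in hr; auto.
    discriminate.
Qed.

Lemma step_root2 k H phi D H' : Inv k H phi D None -> rule_app r_root2 H H' ->
  exists v, In v (gV G) /\ nmk H (phi v) = NGrey /\
    H' = set_nroot (set_nmk H (phi v) NBlue) (phi v) true /\ Inv k H' phi D (Some v).
Proof.
  intros B [x [hx [hg ->]]]. pose proof (inv_enc B) as S.
  destruct (enc_node_of S x hx) as [v [hv ->]]; [congruence|].
  exists v. split; auto. split; auto. split; auto.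
  destruct B; constructor; simpl; auto.
  - apply enc_set_nroot, enc_set_nmk; [auto|apply (enc_ne_c S); auto|discriminate].
  - intros w hw. enc_simpl S. destruct (Nat.eqb_spec w v); subst; auto.
  - intros w hw hf. enc_simpl S. destruct (Nat.eqb_spec w v); subst; auto.
  - intros w hw. enc_simpl S. destruct (Nat.eqb_spec w v); subst; [split; auto|].
    rewrite inv_root0; auto. split; congruence.
  - intros u hu; inversion hu; subst. split; auto. enc_simpl S. rewrite Nat.eqb_refl; auto.
  - intros e he. assert (In (src G e) (gV G)) by (apply src_in_gV; auto). enc_simpl S.
    destruct (Nat.eqb_spec (src G e) v); subst; [discriminate|auto].
  - intros e he. assert (In (src G e) (gV G)) by (apply src_in_gV; auto). enc_simpl S.
    destruct (Nat.eqb_spec (src G e) v); subst; [intros _ h; congruence|].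
    intros hbl _. apply inv_blue_unmarked0; auto. discriminate.
  - intros e he hr. pose proof (inv_red_cur0 e he hr). discriminate.
Qed.

Lemma step_unroot2 k H phi D u H' : Inv k H phi D (Some u) ->
  (forall e, In e (gE G) -> src G e = u -> emk H e = EUnmarked) -> rule_app r_unroot2 H H' ->
  H' = set_nroot H (phi u) false /\ Inv k H' phi D None.
Proof.
  intros B hall [x [hx [hb [hrt ->]]]]. pose proof (inv_enc B) as S.
  destruct (enc_node_of S x hx) as [v [hv ->]]; [congruence|].
  assert (v = u). { apply (inv_root B v hv) in hrt. congruence. }
  subst v. split; auto.
  destruct B; constructor; simpl; auto.
  - apply enc_set_nroot; auto.
  - intros w hw. enc_simpl S. destruct (Nat.eqb_spec w u); subst; [split; discriminate|].
    rewrite inv_root0; auto. split; congruence.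
  - intros w hw; discriminate.
  - intros e he hbl _.
    destruct (Nat.eq_dec (src G e) u); [apply hall; auto|].
    apply inv_blue_unmarked0; auto; congruence.
  - intros e he hr. exfalso. pose proof (inv_red_cur0 e he hr). inversion H0.
    rewrite (hall e he) in hr; auto.
    discriminate.
Qed.

Lemma isolated_unanchored k H phi D u : Inv k H phi D (Some u) ->
  (forall e, In e (gE H) -> src H e <> phi u /\ tgt H e <> phi u) -> ~ anchored u.
Proof.
  intros B hdang. pose proof (inv_enc B) as S. intros [->|[e [he [hs|ht]]]].
  - destruct (hdang e0) as [_ h]; [rewrite (enc_edges S); left; auto|].
    apply h. rewrite (enc_tgt S). unfold upd. rewrite Nat.eqb_refl. symmetry.
    apply (enc_fix_root S).
  - destruct (hdang e) as [h _]; [rewrite (enc_edges S); right; auto|].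
    apply h. rewrite (enc_src_edge S) by auto. congruence.
  - destruct (hdang e) as [_ h]; [rewrite (enc_edges S); right; auto|].
    apply h. rewrite (enc_tgt_edge S) by auto. congruence.
Qed.

Lemma inv_replace_node k H phi D u u' : Inv k H phi D (Some u) -> ~ anchored u ->
  ~ In u' (remove Nat.eq_dec (phi u) (gV H)) ->
  Inv k (add_node (del_node H (phi u)) u' (nlab H (phi u)) NUnmarked false) (upd phi u u') D None.
Proof.
  intros B hnf hu'. pose proof (inv_enc B) as S. destruct (inv_cur B u eq_refl) as [hu _].
  assert (hval : forall A (f : nat -> A) a w, In w (gV G) ->
     upd f u' a (upd phi u u' w) = if Nat.eqb w u then a else f (phi w)) by
    (intros; apply (enc_upd_replace S); auto).
  assert (hsrc : forall e, In e (gE G) -> src G e <> u)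
    by (intros e he h; apply hnf; rewrite <- h; apply anchored_src; auto).
  assert (hsrc_in : forall e, In e (gE G) -> In (src G e) (gV G)) by exact src_in_gV.
  destruct B; constructor; simpl; auto.
  - apply (enc_replace_node S); auto.
  - intros w hw. rewrite !hval; auto. destruct (Nat.eqb_spec w u); auto.
  - intros w hw hf. rewrite !hval; auto. destruct (Nat.eqb_spec w u); subst; [contradiction|auto].
  - intros w hw. rewrite hval; auto. destruct (Nat.eqb_spec w u); subst; [split; discriminate|].
    rewrite inv_root0; auto. split; congruence.
  - intros w hw; discriminate.
  - intros e he. rewrite hval; auto.
    destruct (Nat.eqb_spec (src G e) u); [exfalso; eapply hsrc; eauto|auto].
  - intros e he. rewrite hval; auto.
    destruct (Nat.eqb_spec (src G e) u); [exfalso; eapply hsrc; eauto|].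
    intros hbl _. apply inv_blue_unmarked0; auto. congruence.
  - intros e he hr. injection (inv_red_cur0 e he hr) as h. exfalso. apply (hsrc e he). auto.
Qed.

Lemma step_nodeg k H phi D u H' : Inv k H phi D (Some u) -> rule_app r_no_deg H H' ->
  exists u', H' = add_node (del_node H (phi u)) u' (nlab H (phi u)) NUnmarked false /\
    Inv k H' (upd phi u u') D None.
Proof.
  intros B [x [u' [hx [hb [hrt [hdang [hu' ->]]]]]]]. pose proof (inv_enc B) as S.
  destruct (enc_node_of S x hx) as [v [hv ->]]; [congruence|].
  assert (v = u) by (apply (inv_root B v hv) in hrt; congruence). subst v.
  exists u'. split; auto.
  apply inv_replace_node; auto. eapply isolated_unanchored; eauto.
Qed.

Lemma edge_decode k H phi D u e v1 : Inv k H phi D (Some u) -> In e (gE H) -> emk H e <> EDashed ->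
  src H e = v1 -> nroot H v1 = true -> In e (gE G) /\ src G e = u /\ v1 = phi u.
Proof.
  intros B he hd hs hrt. pose proof (inv_enc B) as S.
  assert (he' : In e (gE G)) by (apply (enc_edge_of S); auto).
  rewrite (enc_src_edge S) in hs; auto. subst v1.
  apply (inv_root B) in hrt; [|apply src_in_gV; auto]. inversion hrt; subst. auto.
Qed.

Lemma inv_set_emk k H phi D u e m : Inv k H phi D (Some u) -> In e (gE G) -> src G e = u ->
  (m = EUnmarked \/ m = ERed \/ m = EBlue) ->
  (m = ERed -> forall e', In e' (gE G) -> e' <> e -> emk H e' <> ERed) ->
  Inv k (set_emk H e m) phi D (Some u).
Proof.
  intros B he hs hm hr. pose proof (inv_enc B) as S.
  destruct B; constructor; simpl; auto.
  - apply enc_set_emk; auto. apply edge_ne_e0; auto.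
  - intros e' he' hg. unfold upd. destruct (Nat.eqb_spec e' e); subst; auto.
    exfalso. destruct (inv_cur0 (src G e) eq_refl). congruence.
  - intros e' he' hbl hro. unfold upd. destruct (Nat.eqb_spec e' e); subst; [congruence|auto].
  - intros e' he'. unfold upd. destruct (Nat.eqb_spec e' e); subst; auto.
  - intros e' he'. unfold upd. destruct (Nat.eqb_spec e' e); subst; auto.
  - intros e1 e2 h1 h2. unfold upd.
    destruct (Nat.eqb_spec e1 e); destruct (Nat.eqb_spec e2 e); subst; auto.
    + intros hm1 h. exfalso. apply (hr hm1 e2 h2); auto.
    + intros h hm1. exfalso. apply (hr hm1 e1 h1); auto.
Qed.

Lemma step_umedge k H phi D u H' : Inv k H phi D (Some u) -> no_red_edge H ->
  rule_app r_unmarked_edge H H' ->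
  exists e, In e (gE G) /\ src G e = u /\ emk H e = EUnmarked /\ H' = set_emk H e ERed /\
    Inv k H' phi D (Some u).
Proof.
  intros B hnr [v1 [v2 [e [_ [_ [_ [hb [hrt [he [hs [ht [hm ->]]]]]]]]]]]].
  destruct (edge_decode _ _ _ _ _ _ _ B he ltac:(congruence) hs hrt) as [he' [hsu _]].
  exists e. do 4 (split; [auto|]). apply inv_set_emk; auto; intros _ e' he' _; apply hnr; auto.
Qed.

Lemma step_finish k H phi D u H' : Inv k H phi D (Some u) -> rule_app r_finish H H' ->
  exists e, In e (gE G) /\ src G e = u /\ emk H e = ERed /\ H' = set_emk H e EBlue /\
    Inv k H' phi D (Some u) /\ no_red_edge H'.
Proof.
  intros B [v1 [v2 [e [_ [_ [_ [hb [hrt [he [hs [ht [hm ->]]]]]]]]]]]].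
  destruct (edge_decode _ _ _ _ _ _ _ B he ltac:(congruence) hs hrt) as [he' [hsu _]].
  exists e. do 4 (split; [auto|]). split.
  - apply inv_set_emk; auto. intros; discriminate.
  - intros e' he2. simpl. unfold upd. destruct (Nat.eqb_spec e' e); [discriminate|].
    intros hr. apply n. apply (inv_red_unique B); auto.
Qed.

Lemma step_unmark_edge k H phi D u H' : Inv k H phi D (Some u) -> rule_app r_unmark_edge H H' ->
  exists e, In e (gE G) /\ src G e = u /\ emk H e = EBlue /\ H' = set_emk H e EUnmarked /\
    Inv k H' phi D (Some u).
Proof.
  intros B [v1 [v2 [e [_ [_ [_ [hb [hrt [he [hs [ht [hm ->]]]]]]]]]]]].
  destruct (edge_decode _ _ _ _ _ _ _ B he ltac:(congruence) hs hrt) as [he' [hsu _]].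
  exists e. do 4 (split; [auto|]).
  apply inv_set_emk; auto. intros; discriminate.
Qed.

Lemma step_unvisited k H phi D u H' : Inv k H phi D (Some u) -> rule_app r_unvisited H H' ->
  exists e s, In e (gE G) /\ src G e = u /\ emk H e = ERed /\ D (src G e) = Some s /\
    D (tgt G e) = None /\
    H' = set_nlab H (phi (tgt G e)) (nlab G (tgt G e) ++ [dist_atom (Some (s + ew G e))]) /\
    Inv k H' phi (upd D (tgt G e) (Some (s + ew G e))) (Some u).
Proof.
  intros B (v1 & v2 & e & xs & ys & s & w & _ & _ & _ & hb & hrt & hl1 & hl2 & he & hs & ht & hm
    & hel & ->).
  pose proof (inv_enc B) as S.
  destruct (edge_decode _ _ _ _ _ _ _ B he ltac:(congruence) hs hrt) as [he' [hsu hv1]].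
  rewrite (enc_tgt_edge S) in ht; auto. subst v2 v1.
  rewrite (enc_elab_edge S) in hel; auto.
  assert (hw : ew G e = w) by (unfold ew; rewrite hel; auto).
  assert (hs' : D (src G e) = Some s).
  { rewrite hv1 in hl1. rewrite hsu.
    eapply (enc_dist_int S); [rewrite <- hsu; apply src_in_gV; auto|exact hl1]. }
  destruct (enc_dist_f S (tgt G e) ys (tgt_in_gV e he') hl2) as [ht' hys].
  exists e, s. subst ys w. do 6 (split; [auto|]).
  exact (inv_set_dist _ _ _ _ _ _ (Some (s + ew G e)) B (tgt_in_gV e he')).
Qed.

Lemma step_reduce k H phi D u H' : Inv k H phi D (Some u) -> rule_app r_reduce H H' ->
  exists e s t, In e (gE G) /\ src G e = u /\ emk H e = ERed /\ D (src G e) = Some s /\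
    D (tgt G e) = Some t /\ s + ew G e < t /\
    H' = set_nlab H (phi (tgt G e)) (nlab G (tgt G e) ++ [dist_atom (Some (s + ew G e))]) /\
    Inv k H' phi (upd D (tgt G e) (Some (s + ew G e))) (Some u).
Proof.
  intros B (v1 & v2 & e & xs & ys & s & t & w & _ & _ & _ & hb & hrt & hl1 & hl2 & he & hs & ht
    & hm & hel & hlt & ->).
  pose proof (inv_enc B) as S.
  destruct (edge_decode _ _ _ _ _ _ _ B he ltac:(congruence) hs hrt) as [he' [hsu hv1]].
  rewrite (enc_tgt_edge S) in ht; auto. subst v2 v1.
  rewrite (enc_elab_edge S) in hel; auto.
  assert (hw : ew G e = w) by (unfold ew; rewrite hel; auto).
  assert (hs' : D (src G e) = Some s).
  { rewrite hv1 in hl1. rewrite hsu.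
    eapply (enc_dist_int S); [rewrite <- hsu; apply src_in_gV; auto|exact hl1]. }
  destruct (enc_dist_int_label S (tgt G e) ys t (tgt_in_gV e he') hl2) as [ht' hys].
  exists e, s, t. subst ys w. do 7 (split; [auto|]).
  exact (inv_set_dist _ _ _ _ _ _ (Some (s + ew G e)) B (tgt_in_gV e he')).
Qed.

Lemma green_is_counter k H phi D ro x :
  Inv k H phi D ro -> In x (gV H) -> nmk H x = NGreen -> x = c.
Proof.
  intros B hx hg. pose proof (inv_enc B) as S.
  destruct (enc_cov S x hx) as [->|[v [hv <-]]]; auto.
  exfalso. apply (enc_not_green S v hv hg).
Qed.

Lemma step_decr k H phi D ro H' : Inv k H phi D ro -> rule_app r_decrement H H' ->
  0 < k /\ H' = set_nlab H c [AInt (k - 1)] /\ Inv (k - 1) H' phi D ro.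
Proof.
  intros B [x [i [hx [hg [hl [hi ->]]]]]]. pose proof (inv_enc B) as S.
  assert (x = c) by (eapply green_is_counter; eauto). subst x.
  assert (i = k) by (eapply enc_counter_val; eauto). subst i.
  split; [lia|]. split; auto. eapply inv_set_counter; eauto.
Qed.

Lemma step_setflag k H phi D ro H' : Inv k H phi D ro -> rule_app r_set_flag H H' ->
  H' = set_nlab H c [AInt (-1)] /\ Inv (-1) H' phi D ro.
Proof.
  intros B [x [hx [hg ->]]]. assert (x = c) by (eapply green_is_counter; eauto). subst x.
  split; auto. eapply inv_set_counter; eauto.
Qed.

Lemma step_flag k H phi D ro H' : Inv k H phi D ro -> rule_app r_flag H H' -> k = -1 /\ H' = H.
Proof.
  intros B [x [hx [hg [hl ->]]]]. pose proof (inv_enc B) as S.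
  assert (x = c) by (eapply green_is_counter; eauto). subst x.
  split; auto. symmetry; eapply enc_counter_val; eauto.
Qed.

Lemma root1_applies H x : In x (gV H) -> nmk H x = NBlue -> rule_app r_root1 H (set_nroot H x true).
Proof. intros; exists x; auto. Qed.

Lemma root2_applies H x : In x (gV H) -> nmk H x = NGrey ->
  rule_app r_root2 H (set_nroot (set_nmk H x NBlue) x true).
Proof. intros; exists x; auto. Qed.

Lemma unroot1_applies k H phi D u : Inv k H phi D (Some u) ->
  rule_app r_unroot1 H (set_nroot (set_nmk H (phi u) NGrey) (phi u) false).
Proof.
  intros B. destruct (inv_cur B u eq_refl) as [hu hb].
  exists (phi u). repeat split; auto. apply (enc_in (inv_enc B)); auto.
  apply (inv_root B); auto.
Qed.

Lemma unroot2_applies k H phi D u : Inv k H phi D (Some u) ->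
  rule_app r_unroot2 H (set_nroot H (phi u) false).
Proof.
  intros B. destruct (inv_cur B u eq_refl) as [hu hb].
  exists (phi u). repeat split; auto. apply (enc_in (inv_enc B)); auto.
  apply (inv_root B); auto.
Qed.

Lemma edge_match k H phi D u e : Inv k H phi D (Some u) -> In e (gE G) -> src G e = u ->
  In (phi u) (gV H) /\ In (phi (tgt G e)) (gV H) /\ phi u <> phi (tgt G e) /\
  nmk H (phi u) = NBlue /\ nroot H (phi u) = true /\ In e (gE H) /\
  src H e = phi u /\ tgt H e = phi (tgt G e).
Proof.
  intros B he hs. pose proof (inv_enc B) as S.
  destruct (inv_cur B u eq_refl) as [hu hb].
  assert (ht : In (tgt G e) (gV G)) by (apply tgt_in_gV; auto).
  refine (conj _ (conj _ (conj _ (conj _ (conj _ (conj _ (conj _ _))))))); auto.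
  - apply (enc_in S); auto.
  - apply (enc_in S); auto.
  - subst u. apply (enc_phi_src_ne S); auto.
  - apply (inv_root B); auto.
  - rewrite (enc_edges S). right; auto.
  - rewrite (enc_src_edge S) by auto; congruence.
  - rewrite (enc_tgt_edge S); auto.
Qed.

Lemma unmarked_edge_applies k H phi D u e : Inv k H phi D (Some u) -> In e (gE G) -> src G e = u ->
  emk H e = EUnmarked -> rule_app r_unmarked_edge H (set_emk H e ERed).
Proof.
  intros B he hs hm.
  destruct (edge_match _ _ _ _ _ _ B he hs) as [h1 [h2 [h3 [h4 [h5 [h6 [h7 h8]]]]]]].
  exists (phi u), (phi (tgt G e)), e. repeat split; auto.
Qed.

Lemma finish_applies k H phi D u e : Inv k H phi D (Some u) -> In e (gE G) -> src G e = u ->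
  emk H e = ERed -> rule_app r_finish H (set_emk H e EBlue).
Proof.
  intros B he hs hm.
  destruct (edge_match _ _ _ _ _ _ B he hs) as [h1 [h2 [h3 [h4 [h5 [h6 [h7 h8]]]]]]].
  exists (phi u), (phi (tgt G e)), e. repeat split; auto.
Qed.

Lemma unmark_edge_applies k H phi D u e : Inv k H phi D (Some u) -> In e (gE G) -> src G e = u ->
  emk H e = EBlue -> rule_app r_unmark_edge H (set_emk H e EUnmarked).
Proof.
  intros B he hs hm.
  destruct (edge_match _ _ _ _ _ _ B he hs) as [h1 [h2 [h3 [h4 [h5 [h6 [h7 h8]]]]]]].
  exists (phi u), (phi (tgt G e)), e. repeat split; auto.
Qed.

Lemma unvisited_applies k H phi D u e s : Inv k H phi D (Some u) -> In e (gE G) -> src G e = u ->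
  emk H e = ERed -> D (src G e) = Some s -> D (tgt G e) = None ->
  exists H', rule_app r_unvisited H H'.
Proof.
  intros B he hs hm hds hdt. pose proof (inv_enc B) as S.
  destruct (edge_match _ _ _ _ _ _ B he hs) as [h1 [h2 [h3 [h4 [h5 [h6 [h7 h8]]]]]]].
  eexists. exists (phi u), (phi (tgt G e)), e, (nlab G u), (nlab G (tgt G e)), s, (ew G e).
  repeat split; auto.
  - rewrite (enc_lab S); [|destruct (inv_cur B u eq_refl); auto]. subst u. rewrite hds. auto.
  - rewrite (enc_lab S); [|apply tgt_in_gV; auto]. rewrite hdt. auto.
  - rewrite (enc_elab_edge S); auto using elab_ew.
Qed.

Lemma reduce_applies k H phi D u e s t : Inv k H phi D (Some u) -> In e (gE G) -> src G e = u ->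
  emk H e = ERed -> D (src G e) = Some s -> D (tgt G e) = Some t -> s + ew G e < t ->
  exists H', rule_app r_reduce H H'.
Proof.
  intros B he hs hm hds hdt hlt. pose proof (inv_enc B) as S.
  destruct (edge_match _ _ _ _ _ _ B he hs) as [h1 [h2 [h3 [h4 [h5 [h6 [h7 h8]]]]]]].
  eexists. exists (phi u), (phi (tgt G e)), e, (nlab G u), (nlab G (tgt G e)), s, t, (ew G e).
  repeat split; auto.
  - rewrite (enc_lab S); [|destruct (inv_cur B u eq_refl); auto]. subst u. rewrite hds. auto.
  - rewrite (enc_lab S); [|apply tgt_in_gV; auto]. rewrite hdt. auto.
  - rewrite (enc_elab_edge S); auto using elab_ew.
Qed.

Lemma decrement_applies k H phi D ro : Inv k H phi D ro -> 0 < k ->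
  rule_app r_decrement H (set_nlab H c [AInt (k - 1)]).
Proof.
  intros B hk. pose proof (inv_enc B) as S. exists c, k.
  repeat split; auto; [apply (enc_c_in S)|apply (enc_c_green S)|apply (enc_c_lab S)].
Qed.

Lemma set_flag_applies k H phi D ro :
  Inv k H phi D ro -> rule_app r_set_flag H (set_nlab H c [AInt (-1)]).
Proof.
  intros B. pose proof (inv_enc B) as S. exists c.
  repeat split; auto; [apply (enc_c_in S)|apply (enc_c_green S)].
Qed.

Lemma flag_applies H phi D ro : Inv (-1) H phi D ro -> rule_app r_flag H H.
Proof.
  intros B. pose proof (inv_enc B) as S. exists c.
  repeat split; auto; [apply (enc_c_in S)|apply (enc_c_green S)|apply (enc_c_lab S)].
Qed.

(* [Dprev] are the estimates at the start of the pass; [rd] tells whether the current red edge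
   has already been relaxed. *)
Record RelaxInv (Dprev : nat -> option Z) (H : graph) (D : nat -> option Z) (rd : bool) : Prop := {
  rlx_blue : forall e, In e (gE G) -> emk H e = EBlue -> relaxed G Dprev D e;
  rlx_red : forall e, In e (gE G) -> emk H e = ERed -> rd = true -> relaxed G Dprev D e;
  rlx_sound : dist_sound G r D;
  rlx_le : forall v, In v (gV G) -> ole (D v) (Dprev v) }.
Arguments rlx_blue {Dprev H D rd}. Arguments rlx_red {Dprev H D rd}.
Arguments rlx_sound {Dprev H D rd}. Arguments rlx_le {Dprev H D rd}.

Lemma rlx_same_emk Dprev H H' D rd :
  RelaxInv Dprev H D rd -> emk H' = emk H -> RelaxInv Dprev H' D rd.
Proof. intros P h. destruct P; constructor; rewrite ?h; auto. Qed.

Lemma rlx_unmarked_edge Dprev H D rd e : RelaxInv Dprev H D rd -> emk H e = EUnmarked ->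
  RelaxInv Dprev (set_emk H e ERed) D false.
Proof.
  intros P h. destruct P; constructor; simpl; auto.
  - intros e' he'. unfold upd. destruct (Nat.eqb_spec e' e); [discriminate|auto].
  - intros; discriminate.
Qed.

Lemma rlx_finish Dprev H D e : RelaxInv Dprev H D true -> In e (gE G) -> emk H e = ERed ->
  RelaxInv Dprev (set_emk H e EBlue) D true.
Proof.
  intros P he h. destruct P; constructor; simpl; auto.
  - intros e' he'. unfold upd. destruct (Nat.eqb_spec e' e); subst; auto.
  - intros e' he'. unfold upd. destruct (Nat.eqb_spec e' e); subst; [discriminate|auto].
Qed.

Lemma rlx_relax Dprev H H' D rd e s : RelaxInv Dprev H D rd -> emk H' = emk H -> In e (gE G) ->
  emk H e = ERed -> (forall e', In e' (gE G) -> emk H e' = ERed -> e' = e) ->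
  D (src G e) = Some s -> ole (Some (s + ew G e)) (D (tgt G e)) ->
  RelaxInv Dprev H' (upd D (tgt G e) (Some (s + ew G e))) true.
Proof.
  intros P hm he hr huniq hs hle. destruct P as [pb pr ps pl]. constructor; rewrite ?hm.
  - intros e' he' hb. specialize (pb e' he' hb). unfold relaxed in *. unfold upd.
    destruct (Nat.eqb_spec (tgt G e') (tgt G e)) as [h|h].
    + rewrite <- h in hle. eapply ole_trans; eauto.
    + auto.
  - intros e' he' hr' _. rewrite (huniq e' he' hr'). unfold relaxed. unfold upd.
    rewrite Nat.eqb_refl. assert (hsn : src G e <> tgt G e) by auto.
    pose proof (pl (src G e) (src_in_gV e he)) as hl. rewrite hs in hl.
    destruct (Dprev (src G e)) as [s0|]; simpl in *; auto. lia.
  - intros v d hv hd. unfold upd in hd. destruct (Nat.eqb_spec v (tgt G e)) as [->|h].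
    + inversion hd; subst. destruct (ps (src G e) s (src_in_gV e he) hs) as [p [hw hwt]].
      exists (p ++ [e]). split.
      * apply walk_app. exists (src G e). split; auto. simpl. auto.
      * rewrite weight_app. simpl. lia.
    + apply ps; auto.
  - intros v hv. unfold upd. destruct (Nat.eqb_spec v (tgt G e)) as [->|h]; auto.
    eapply ole_trans; eauto.
Qed.

Definition no_unmarked_out u H := forall e, In e (gE G) -> src G e = u -> emk H e <> EUnmarked.
Definition no_blue_out u H := forall e, In e (gE G) -> src G e = u -> emk H e <> EBlue.

Definition relax_edge : cmd :=
  Seq (Call [r_unmarked_edge])
      (Seq (Try (Call [r_unvisited; r_reduce]) Skip Skip) (Call [r_finish])).
Definition relax_edges := Loop relax_edge.

Definition RelaxEdges Dprev k u n0 H := exists phi D,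
  Inv k H phi D (Some u) /\ no_red_edge H /\ RelaxInv Dprev H D true /\ blue_nodes H = n0.
Definition RelaxRed Dprev k u n0 rd H := exists phi D e,
  Inv k H phi D (Some u) /\ RelaxInv Dprev H D rd /\
  blue_nodes H = n0 /\ In e (gE G) /\ src G e = u /\ emk H e = ERed.

Lemma relax_red_step Dprev k u n0 H rl H' : RelaxRed Dprev k u n0 false H ->
  In rl [r_unvisited; r_reduce] -> rule_app rl H H' ->
  RelaxRed Dprev k u n0 true H' /\ unmarked_edges H' = unmarked_edges H.
Proof.
  intros [phi [D [e [B [P [hn [he [hs hr]]]]]]]] hin happ.
  assert (huniq : forall e', In e' (gE G) -> emk H e' = ERed -> e' = e)
    by (intros e' he' hr'; apply (inv_red_unique B); auto).
  destruct hin as [<-|[<-|[]]].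
  - destruct (step_unvisited _ _ _ _ _ _ B happ) as [e1 [s [he1 [hs1 [hr1 [hd1 [hd2 [-> B']]]]]]]].
    assert (e1 = e) by auto. subst e1.
    split; [|reflexivity]. exists phi, (upd D (tgt G e) (Some (s + ew G e))), e.
    split; [exact B'|split; [|repeat split; auto]].
    eapply rlx_relax; eauto. rewrite hd2; simpl; auto.
  - destruct (step_reduce _ _ _ _ _ _ B happ)
      as (e1 & s & t & he1 & hs1 & hr1 & hd1 & hd2 & hlt & -> & B').
    assert (e1 = e) by auto. subst e1.
    split; [|reflexivity]. exists phi, (upd D (tgt G e) (Some (s + ew G e))), e.
    split; [exact B'|split; [|repeat split; auto]].
    eapply rlx_relax; eauto. rewrite hd2; simpl; lia.
Qed.

Lemma relax_red_stuck Dprev k u n0 H : RelaxRed Dprev k u n0 false H ->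
  (forall rl H', In rl [r_unvisited; r_reduce] -> ~ rule_app rl H H') ->
  RelaxRed Dprev k u n0 true H.
Proof.
  intros [phi [D [e [B [P [hn [he [hs hr]]]]]]]] hfail.
  exists phi, D, e. split; [exact B|split; [|repeat split; auto]].
  destruct P as [pb pr ps pl]. constructor; auto. intros e' he' hr' _.
  assert (e' = e) by (apply (inv_red_unique B); auto). subst e'.
  unfold relaxed. pose proof (pl (src G e) (src_in_gV e he)) as hl.
  destruct (D (src G e)) as [s|] eqn:hds; [|destruct (Dprev (src G e)); simpl in *; tauto].
  destruct (D (tgt G e)) as [t|] eqn:hdt.
  - destruct (Z_lt_ge_dec (s + ew G e) t) as [hlt|hge].
    + exfalso. destruct (reduce_applies _ _ _ _ _ _ s t B he hs hr hds hdt hlt) as [H' ha].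
      apply (hfail r_reduce H'); simpl; auto.
    + destruct (Dprev (src G e)); simpl in *; auto. lia.
  - exfalso. destruct (unvisited_applies _ _ _ _ _ _ s B he hs hr hds hdt) as [H' ha].
    apply (hfail r_unvisited H'); simpl; auto.
Qed.

Lemma hoare_relax_red Dprev k u n0 :
  hoare (Seq (Try (Call [r_unvisited; r_reduce]) Skip Skip) (Call [r_finish]))
    (RelaxRed Dprev k u n0 false)
    (fun H o =>
       match o with
       | Res H1 => RelaxEdges Dprev k u n0 H1 /\ (unmarked_edges H1 <= unmarked_edges H)%nat
       | Fail => False end).
Proof.
  eapply hoare_seq with (Mid := RelaxRed Dprev k u n0 true)
    (M := fun H o =>
            match o with
            | Res H1 => RelaxRed Dprev k u n0 true H1 /\ unmarked_edges H1 = unmarked_edges H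
            | Fail => False end)
    (N := fun H1 o =>
            match o with
            | Res H2 => RelaxEdges Dprev k u n0 H2 /\ (unmarked_edges H2 <= unmarked_edges H1)%nat
            | Fail => False end).
  - eapply hoare_try with (PreP := fun _ => True)
      (NP := fun H o => o = Res H) (NQ := fun H o => o = Res H)
      (MC := fun H o =>
               match o with
               | Res H1 => RelaxRed Dprev k u n0 true H1 /\ unmarked_edges H1 = unmarked_edges H
               | Fail => RelaxRed Dprev k u n0 true H end).
    + apply hoare_call; [intros; eapply relax_red_step; eauto|intros; apply relax_red_stuck; auto].
    + apply hoare_skip.
    + apply hoare_skip.
    + auto.
    + intros H H1 o _ h ->. exact h.
    + intros H o _ h ->. auto.
  - apply hoare_call1.
    + intros H [phi [D [e [B [P [hn [he [hs hr]]]]]]]] H' happ.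
      destruct (step_finish _ _ _ _ _ _ B happ) as [e1 [he1 [hs1 [hm1 [-> [B' hnr']]]]]].
      assert (e1 = e) by (apply (inv_red_unique B); auto). subst e1.
      split; [|apply count_edges_set_emk_le; auto].
      exists phi, D. split; [exact B'|split; [exact hnr'|split; [apply rlx_finish|]]]; auto.
    + intros H [phi [D [e [B [P [hn [he [hs hr]]]]]]]] hfail.
      apply (hfail (set_emk H e EBlue)). eapply finish_applies; eauto.
  - intros H H1 _ [h _]; exact h.
  - intros H _ [].
  - intros H H1 [H2|] _ [_ h1] h2; [|destruct h2]. destruct h2 as [h2 h3]. split; auto. lia.
Qed.

Lemma hoare_relax_edge Dprev k u n0 : hoare relax_edge (RelaxEdges Dprev k u n0)
  (decreases (RelaxEdges Dprev k u n0) unmarked_edges (no_unmarked_out u)).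
Proof.
  eapply hoare_seq with (Mid := RelaxRed Dprev k u n0 false)
    (M := fun H o =>
            match o with
            | Res H1 => RelaxRed Dprev k u n0 false H1 /\ (unmarked_edges H1 < unmarked_edges H)%nat
            | Fail => no_unmarked_out u H end).
  - apply hoare_call1.
    + intros H [phi [D [B [hnr [P hn]]]]] H' happ.
      destruct (step_umedge _ _ _ _ _ _ B hnr happ) as [e [he [hs [hm [-> B']]]]].
      split.
      * exists phi, D, e. split; [exact B'|split; [eapply rlx_unmarked_edge; eauto|]].
        repeat split; auto. simpl. unfold upd. rewrite Nat.eqb_refl. auto.
      * apply count_edges_set_emk_lt; [|rewrite hm; auto|auto].
        rewrite (enc_edges (inv_enc B)). right; auto.
    + intros H [phi [D [B [hnr [P hn]]]]] hfail e he hs hm.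
      apply (hfail (set_emk H e ERed)). eapply unmarked_edge_applies; eauto.
  - apply hoare_relax_red.
  - intros H H1 _ [h _]; exact h.
  - intros H _ h; exact h.
  - intros H H1 [H2|] _ [_ h1] h2; [|destruct h2]. destruct h2 as [h2 h3]. split; auto. lia.
Qed.

Lemma hoare_relax_edges Dprev k u n0 : hoare relax_edges (RelaxEdges Dprev k u n0)
  (fun _ o => exists H1, o = Res H1 /\ RelaxEdges Dprev k u n0 H1 /\
     no_unmarked_out u H1).
Proof.
  apply (hoare_loop relax_edge (RelaxEdges Dprev k u n0) _ (unmarked_edges)).
  apply hoare_relax_edge.
Qed.

Definition no_blue_node H := forall x, In x (gV H) -> nmk H x <> NBlue.
Definition no_grey_node H := forall x, In x (gV H) -> nmk H x <> NGrey.
Definition RelaxState Dprev k H := exists phi D, Inv k H phi D None /\ RelaxInv Dprev H D true.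
Definition RelaxRooted Dprev k H := exists phi D u,
  Inv k H phi D (Some u) /\ no_red_edge H /\ RelaxInv Dprev H D true.

Lemma hoare_relax_edges_unroot Dprev k u n0 :
  hoare (Seq relax_edges (Call [r_unroot1])) (RelaxEdges Dprev k u n0)
  (fun _ o => match o with
                | Res H2 => RelaxState Dprev k H2 /\ (blue_nodes H2 < n0)%nat
                | Fail => False end).
Proof.
  eapply hoare_seq with (Mid := fun H1 => RelaxEdges Dprev k u n0 H1 /\
      no_unmarked_out u H1)
    (N := fun H1 o => match o with
                        | Res H2 => RelaxState Dprev k H2 /\ (blue_nodes H2 < n0)%nat
                        | Fail => False end).
  - apply hoare_relax_edges.
  - apply hoare_call1.
    + intros H [[phi [D [B [hnr [P hn]]]]] hall] H' happ.
      assert (hb : forall e, In e (gE G) -> src G e = u -> emk H e = EBlue).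
      { intros e he hs. destruct (inv_emk B e he) as [h|[h|h]]; auto.
        - exfalso; apply (hall e he hs h).
        - exfalso; apply (hnr e he h). }
      destruct (step_unroot1 _ _ _ _ _ _ B hb happ) as [-> B'].
      split.
      * exists phi, D. split; auto. eapply rlx_same_emk; eauto.
      * subst n0. destruct (inv_cur B u eq_refl) as [hu hbl].
        apply (count_nodes_set_nmk_lt is_blue H (phi u) NGrey); auto.
        apply (enc_in (inv_enc B)); auto. rewrite hbl; auto.
    + intros H [[phi [D [B [hnr [P hn]]]]] hall] hfail.
      eapply hfail. eapply unroot1_applies; eauto.
  - intros H H1 _ [H2 [e [h1 h2]]]. inversion e; subst; auto.
  - intros H _ [H2 [e _]]; discriminate.
  - intros H H1 o _ _ h; exact h.
Qed.

Lemma hoare_relax_rooted Dprev k :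
  hoare (Try (Call [r_no_deg]) Skip (Seq relax_edges (Call [r_unroot1]))) (RelaxRooted Dprev k)
    (fun H o =>
       match o with
       | Res H1 => RelaxState Dprev k H1 /\ (blue_nodes H1 < blue_nodes H)%nat
       | Fail => False end).
Proof.
  eapply hoare_try with (PreP := fun _ => True) (NP := fun H o => o = Res H)
    (MC := fun H o =>
             match o with
             | Res H1 => RelaxState Dprev k H1 /\ (blue_nodes H1 < blue_nodes H)%nat
             | Fail => True end)
    (NQ := fun H o =>
             match o with
             | Res H1 => RelaxState Dprev k H1 /\ (blue_nodes H1 < blue_nodes H)%nat
             | Fail => False end).
  - apply hoare_call1.
    + intros H [phi [D [u [B [hnr P]]]]] H' happ.
      destruct (step_nodeg _ _ _ _ _ _ B happ) as [u' [-> B']].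
      split.
      * exists (upd phi u u'), D. split; auto. eapply rlx_same_emk; eauto.
      * destruct (inv_cur B u eq_refl) as [hu hbl].
        apply count_nodes_replace_lt; auto. apply (enc_in (inv_enc B)); auto.
        rewrite hbl; auto.
    + intros; exact I.
  - apply hoare_skip.
  - intros H [[phi [D [u [B [hnr P]]]]] _].
    assert (hI : RelaxEdges Dprev k u (blue_nodes H) H) by (exists phi, D; auto).
    exact (hoare_relax_edges_unroot Dprev k u (blue_nodes H) H hI).
  - intros; exact I.
  - intros H H1 o _ h ->. exact h.
  - intros H o _ _ h. exact h.
Qed.

Lemma hoare_Relax Dprev k : hoare Relax (RelaxState Dprev k)
  (decreases (RelaxState Dprev k) blue_nodes no_blue_node).
Proof.
  unfold Relax. eapply hoare_seq with
    (M := fun H o => match o with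
                       | Res H1 => RelaxRooted Dprev k H1 /\ blue_nodes H1 = blue_nodes H
                       | Fail => no_blue_node H end)
    (Mid := RelaxRooted Dprev k)
    (N := fun H1 o => match o with
                        | Res H2 => RelaxState Dprev k H2 /\ (blue_nodes H2 < blue_nodes H1)%nat
                        | Fail => False end).
  - apply hoare_call1.
    + intros H [phi [D [B P]]] H' happ.
      destruct (step_root1 _ _ _ _ _ B happ) as [v [hv [hb [-> B']]]].
      split; [|reflexivity]. exists phi, D, v. split; auto. split.
      * apply (inv_no_red _ _ _ _ B).
      * eapply rlx_same_emk; eauto.
    + intros H _ hfail x hx hb. eapply hfail. apply root1_applies; eauto.
  - apply hoare_relax_rooted.
  - intros H H1 _ [h _]; exact h.
  - intros H _ h; exact h.
  - intros H H1 [H2|] _ [_ h1] h2; [|destruct h2]. destruct h2 as [h2 h3]. split; auto. lia.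
Qed.


Lemma hoare_Relax_loop Dprev k : hoare (Loop Relax) (RelaxState Dprev k)
  (fun _ o => exists H1, o = Res H1 /\ RelaxState Dprev k H1 /\ no_blue_node H1).
Proof. apply (hoare_loop Relax (RelaxState Dprev k) _ (blue_nodes)). apply hoare_Relax. Qed.

Definition CleanState k D H := exists phi, Inv k H phi D None.
Definition CleanRooted k D u n1 H :=
  (exists phi, Inv k H phi D (Some u) /\ no_red_edge H) /\ grey_nodes H = n1.

Lemma hoare_unmark_edges k D u n1 : hoare (Loop (Call [r_unmark_edge])) (CleanRooted k D u n1)
  (fun _ o => exists H1, o = Res H1 /\ CleanRooted k D u n1 H1 /\
     no_blue_out u H1).
Proof.
  apply (hoare_loop _ (CleanRooted k D u n1) _ (blue_edges)). apply hoare_call1.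
  - intros H [[phi [B hnr]] hn] H' happ.
    destruct (step_unmark_edge _ _ _ _ _ _ B happ) as [e [he [hs [hm [-> B']]]]].
    split.
    + split; auto. exists phi. split; auto. intros e' he'. simpl. unfold upd.
      destruct (Nat.eqb_spec e' e); [discriminate|auto].
    + apply count_edges_set_emk_lt; auto; [|rewrite hm; auto].
      rewrite (enc_edges (inv_enc B)). right; auto.
  - intros H [[phi [B hnr]] hn] hfail e he hs hm.
    eapply hfail. eapply unmark_edge_applies; eauto.
Qed.

Lemma hoare_clean_rooted k D u n1 :
  hoare (Seq (Loop (Call [r_unmark_edge])) (Call [r_unroot2])) (CleanRooted k D u n1)
    (fun _ o => match o with
                  | Res H2 => CleanState k D H2 /\ (grey_nodes H2 <= n1)%nat
                  | Fail => False end).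
Proof.
  eapply hoare_seq with
    (Mid := fun H1 => CleanRooted k D u n1 H1 /\ no_blue_out u H1)
    (N := fun _ o => match o with
                       | Res H2 => CleanState k D H2 /\ (grey_nodes H2 <= n1)%nat
                       | Fail => False end).
  - apply hoare_unmark_edges.
  - apply hoare_call1.
    + intros H [[[phi [B hnr]] hn] hall] H' happ.
      assert (hu : forall e, In e (gE G) -> src G e = u -> emk H e = EUnmarked).
      { intros e he hs. destruct (inv_emk B e he) as [h|[h|h]]; auto.
        - exfalso; apply (hnr e he h).
        - exfalso; apply (hall e he hs h). }
      destruct (step_unroot2 _ _ _ _ _ _ B hu happ) as [-> B'].
      split; [exists phi; auto|]. subst n1. unfold count_nodes. simpl. lia.
    + intros H [[[phi [B hnr]] hn] hall] hfail.
      eapply hfail. eapply unroot2_applies; eauto.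
  - intros H H1 _ [H2 [e [h1 h2]]]. inversion e; subst; auto.
  - intros H _ [H2 [e _]]; discriminate.
  - intros H H1 o _ _ h; exact h.
Qed.

Lemma hoare_Clean k D : hoare Clean (CleanState k D)
  (decreases (CleanState k D) grey_nodes no_grey_node).
Proof.
  unfold Clean. eapply hoare_seq with
    (M := fun H o => match o with
                     | Res H1 => (exists u, CleanRooted k D u (grey_nodes H1) H1) /\
                                 (grey_nodes H1 < grey_nodes H)%nat
                     | Fail => no_grey_node H end)
    (Mid := fun H1 => exists u, CleanRooted k D u (grey_nodes H1) H1)
    (N := fun H1 o => match o with
                      | Res H2 => CleanState k D H2 /\ (grey_nodes H2 <= grey_nodes H1)%nat
                      | Fail => False end).
  - apply hoare_call1.
    + intros H [phi B] H' happ.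
      destruct (step_root2 _ _ _ _ _ B happ) as [v [hv [hg [-> B']]]].
      split.
      * exists v. split; auto. exists phi. split; auto. apply (inv_no_red _ _ _ _ B).
      * apply (count_nodes_set_nmk_lt is_grey H (phi v) NBlue); auto.
        apply (enc_in (inv_enc B)); auto. rewrite hg; auto.
    + intros H _ hfail x hx hg. eapply hfail. apply root2_applies; eauto.
  - intros H1 [u hcr]. exact (hoare_clean_rooted k D u (grey_nodes H1) H1 hcr).
  - intros H H1 _ [h _]; exact h.
  - intros H _ h; exact h.
  - intros H H1 [H2|] _ [_ h1] h2; [|destruct h2]. destruct h2 as [h2 h3]. split; auto. lia.
Qed.

Lemma hoare_Clean_loop k D : hoare (Loop Clean) (CleanState k D)
  (fun _ o => exists H1, o = Res H1 /\ CleanState k D H1 /\ no_grey_node H1).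
Proof. apply (hoare_loop Clean (CleanState k D) _ (grey_nodes)). apply hoare_Clean. Qed.

Definition anchored_grey H phi := forall v, In v (gV G) -> anchored v -> nmk H (phi v) = NGrey.

Lemma no_blue_anchored_grey k H phi D : Inv k H phi D None -> no_blue_node H -> anchored_grey H phi.
Proof.
  intros B hnb v hv hav. destruct (inv_anchored B v hv hav) as [h|h]; auto.
  exfalso. apply (hnb (phi v)); auto. apply (enc_in (inv_enc B)); auto.
Qed.

Lemma no_grey_src_blue k H phi D e : Inv k H phi D None -> no_grey_node H -> In e (gE G) ->
  nmk H (phi (src G e)) = NBlue.
Proof.
  intros B hng he. assert (hs : In (src G e) (gV G)) by (apply src_in_gV; auto).
  destruct (inv_anchored B (src G e) hs (anchored_src e he)) as [h|h]; auto.
  exfalso. apply (hng (phi (src G e))); auto. apply (enc_in (inv_enc B)); auto.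
Qed.

Definition all_unmarked H := forall e, In e (gE G) -> emk H e = EUnmarked.

Lemma hoare_pass Dprev k np : dist_sound G r Dprev -> dist_bounded G r Dprev np ->
  hoare (Seq (Loop Relax) (Loop Clean))
    (fun H => exists phi, Inv k H phi Dprev None /\ all_unmarked H)
  (fun _ o => match o with
              | Res H2 => exists phi D, Inv k H2 phi D None /\ all_unmarked H2 /\
                                        dist_sound G r D /\ dist_bounded G r D (S np)
              | Fail => False end).
Proof.
  intros hs hc. eapply hoare_seq with
    (M := fun _ o => exists H1, o = Res H1 /\ RelaxState Dprev k H1 /\ no_blue_node H1)
    (Mid := fun H1 => exists D, CleanState k D H1 /\ dist_sound G r D /\ dist_bounded G r D (S np))
    (N := fun _ o => match o with
                     | Res H2 => exists phi D, Inv k H2 phi D None /\ all_unmarked H2 /\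
                                               dist_sound G r D /\ dist_bounded G r D (S np)
                     | Fail => False end).
  - eapply hoare_conseq; [apply (hoare_Relax_loop Dprev k)| |].
    + intros H [phi [B hu]]. exists phi, Dprev. split; auto. constructor; auto.
      * intros e he hb. rewrite hu in hb; auto. discriminate.
      * intros e he hb. rewrite hu in hb; auto. discriminate.
      * intros v hv. apply ole_refl.
    + intros H o _ h; exact h.
  - intros H1 [D [[phi B] [hsD hcD]]].
    destruct (hoare_Clean_loop k D H1 (ex_intro _ phi B)) as [t o]. split; auto.
    intros o' hx. destruct (o o' hx) as [H2 [-> [[phi2 B2] hng]]].
    exists phi2, D. split; [exact B2|split; [|auto]].
    intros e he. apply (inv_blue_unmarked B2); [auto|eapply no_grey_src_blue; eauto|discriminate].
  - intros H H1 _ [H2 [e [[phi [D [B P]]] hnb]]]. inversion e; subst H2.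
    exists D. split; [exists phi; auto|]. split; [apply (rlx_sound P)|].
    apply (dist_bounded_relax G r Dprev); auto; [|apply (rlx_le P)].
    intros e' he'. apply (rlx_blue P); auto.
    apply (inv_grey_blue B); [auto|apply (no_blue_anchored_grey _ _ _ _ B hnb)];
      auto using src_in_gV, anchored_src.
  - intros H _ [H2 [e _]]; discriminate.
  - intros H H1 o _ _ h; exact h.
Qed.

Definition nverts := Z.of_nat (length (gV G)).
Definition counter_value H := match nlab H c with [AInt k] => Z.to_nat k | _ => O end.
Definition round := Seq (Call [r_decrement]) (Seq (Loop Relax) (Loop Clean)).
(* [np] is the number of completed passes. *)
Definition RoundInv H := exists phi D k np,
  Inv k H phi D None /\ all_unmarked H /\ dist_sound G r D /\ dist_bounded G r D np /\
  0 <= k /\ Z.of_nat np + k = nverts - 1.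
Definition counter_nonpos H := forall i, nlab H c = [AInt i] -> i <= 0.

Lemma hoare_round phi D k np : dist_sound G r D -> dist_bounded G r D np ->
  0 <= k -> Z.of_nat np + k = nverts - 1 ->
  hoare round (fun H => Inv k H phi D None /\ all_unmarked H)
    (decreases RoundInv counter_value counter_nonpos).
Proof.
  intros hs hc hk hn. eapply hoare_seq with
    (M := fun H o =>
            match o with
            | Res H1 => Inv (k - 1) H1 phi D None /\ all_unmarked H1 /\ 0 < k
            | Fail => counter_nonpos H end)
    (Mid := fun H1 => exists phi', Inv (k - 1) H1 phi' D None /\ all_unmarked H1)
    (N := fun _ o =>
            match o with
            | Res H2 => exists phi D, Inv (k - 1) H2 phi D None /\ all_unmarked H2 /\
                                      dist_sound G r D /\ dist_bounded G r D (S np)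
            | Fail => False end).
  - apply hoare_call1.
    + intros H [B hu] H' happ.
      destruct (step_decr _ _ _ _ _ _ B happ) as [hk' [-> B']]. auto.
    + intros H [B hu] hfail i hi. destruct (Z_le_gt_dec i 0) as [h|h]; auto.
      exfalso. assert (i = k) by (eapply enc_counter_val; [apply (inv_enc B)|]; eauto). subst i.
      eapply hfail. eapply decrement_applies; eauto. lia.
  - apply hoare_pass; auto.
  - intros H H1 _ [B [hu _]]. eauto.
  - intros H _ h; exact h.
  - intros H H1 [H2|] [B _] [B1 [hu1 hk']] h; [|destruct h].
    destruct h as [phi2 [D2 [B2 [hu2 [hs2 hc2]]]]]. split.
    + exists phi2, D2, (k - 1), (S np). do 4 (split; [auto|]). split; lia.
    + unfold counter_value. rewrite (enc_c_lab (inv_enc B2)), (enc_c_lab (inv_enc B)). lia.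
Qed.

Lemma hoare_rounds : hoare (Loop round) RoundInv
  (fun _ o => exists H1, o = Res H1 /\ RoundInv H1 /\ counter_nonpos H1).
Proof.
  apply (hoare_loop round RoundInv counter_nonpos counter_value).
  intros H [phi [D [k [np [B [hu [hs [hc [hk hn]]]]]]]]].
  apply (hoare_round phi D k np hs hc hk hn H). auto.
Qed.

(** ** Detecting negative cycles *)

(* [k] is the counter, which [set_flag] sets to [-1]. *)
Record CheckInv (H : graph) (D : nat -> option Z) (k : Z) (rd : bool) : Prop := {
  chk_k : k = 0 \/ k = -1;
  chk_flagged : k = -1 -> has_improvable_edge G D;
  chk_blue : forall e, In e (gE G) -> emk H e = EBlue -> improvable G D e -> k = -1;
  chk_red : forall e, In e (gE G) -> emk H e = ERed -> rd = true -> improvable G D e -> k = -1 }.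
Arguments chk_k {H D k rd}. Arguments chk_flagged {H D k rd}. Arguments chk_blue {H D k rd}.
Arguments chk_red {H D k rd}.

Lemma chk_same_emk H H' D k rd : CheckInv H D k rd -> emk H' = emk H -> CheckInv H' D k rd.
Proof. intros F h. destruct F; constructor; rewrite ?h; auto. Qed.

Lemma chk_unmarked_edge H D k rd e : CheckInv H D k rd -> emk H e = EUnmarked ->
  CheckInv (set_emk H e ERed) D k false.
Proof.
  intros F h. destruct F; constructor; simpl; auto.
  - intros e' he'. unfold upd. destruct (Nat.eqb_spec e' e); [discriminate|eauto].
  - intros; discriminate.
Qed.

Lemma chk_finish H D k e : CheckInv H D k true -> emk H e = ERed ->
  CheckInv (set_emk H e EBlue) D k true.
Proof.
  intros F h. destruct F as [f1 f2 f3 f4]; constructor; simpl; auto.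
  - intros e' he'. unfold upd. destruct (Nat.eqb_spec e' e) as [->|]; eauto.
  - intros e' he'. unfold upd. destruct (Nat.eqb_spec e' e); [discriminate|eauto].
Qed.

Definition check_edge : cmd :=
  Seq (Call [r_unmarked_edge])
      (Seq (If (Call [r_reduce]) (Call [r_set_flag]) Skip) (Call [r_finish])).
Definition check_edges := Loop check_edge.
Definition check_nodes := Loop (Seq (Call [r_root1]) (Seq check_edges (Call [r_unroot1]))).

Definition CheckEdges D u n0 H := exists phi k,
  Inv k H phi D (Some u) /\ no_red_edge H /\ CheckInv H D k true /\ blue_nodes H = n0.
Definition CheckRed D u n0 rd H := exists phi k e, Inv k H phi D (Some u) /\ CheckInv H D k rd /\
  blue_nodes H = n0 /\ In e (gE G) /\ src G e = u /\ emk H e = ERed.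

Lemma hoare_check_if D u n0 :
  hoare (If (Call [r_reduce]) (Call [r_set_flag]) Skip) (CheckRed D u n0 false)
  (fun H o => match o with
                | Res H2 => CheckRed D u n0 true H2 /\ unmarked_edges H2 = unmarked_edges H
                | Fail => False end).
Proof.
  eapply hoare_if with
    (MC := fun H o => match o with Res _ => has_improvable_edge G D
           | Fail => forall e, In e (gE G) -> emk H e = ERed -> ~ improvable G D e end)
    (NP := fun H o => match o with
                        | Res H2 => CheckRed D u n0 true H2 /\ unmarked_edges H2 = unmarked_edges H
                        | Fail => False end)
    (NQ := fun H o => o = Res H).
  - apply hoare_call1.
    + intros H [phi [k [e [B [F [hn [he [hs hr]]]]]]]] H' happ.
      destruct (step_reduce _ _ _ _ _ _ B happ) as [e1 [s [t [he1 [_ [_ [h1 [h2 [hlt _]]]]]]]]].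
      exists e1. split; auto. exists s, t. auto.
    + intros H [phi [k [e [B [F [hn [he [hs hr]]]]]]]] hfail e' he' hr' [s [t [h1 [h2 hlt]]]].
      pose proof (inv_red_cur B e' he' hr') as hro. inversion hro.
      destruct (reduce_applies _ _ _ _ _ _ s t B he' (eq_sym H1) hr' h1 h2 hlt) as [H' ha].
      exact (hfail H' ha).
  - apply hoare_call1.
    + intros H [[phi [k [e [B [F [hn [he [hs hr]]]]]]]] [_ [e1 [he1 hred]]]] H' happ.
      destruct (step_setflag _ _ _ _ _ _ B happ) as [-> B'].
      split; [|reflexivity]. exists phi, (-1), e. split; auto. split; [|auto].
      constructor; auto. intros _. exists e1; auto.
    + intros H [[phi [k [e [B [F [hn [he [hs hr]]]]]]]] _] hfail.
      eapply hfail. eapply set_flag_applies; eauto.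
  - apply hoare_skip.
  - intros H o _ _ h; exact h.
  - intros H o [phi [k [e [B [F [hn [he [hs hr]]]]]]]] hf ->. split; auto.
    exists phi, k, e. split; auto. split; auto.
    destruct F; constructor; auto. intros e' he' hr' _ hred. exfalso; apply (hf e' he' hr' hred).
Qed.

Lemma hoare_check_red D u n0 :
  hoare (Seq (If (Call [r_reduce]) (Call [r_set_flag]) Skip) (Call [r_finish]))
    (CheckRed D u n0 false)
    (fun H o => match o with
                | Res H1 => CheckEdges D u n0 H1 /\ (unmarked_edges H1 <= unmarked_edges H)%nat
                | Fail => False end).
Proof.
  eapply hoare_seq with (Mid := CheckRed D u n0 true)
    (M := fun H o => match o with
                     | Res H1 => CheckRed D u n0 true H1 /\ unmarked_edges H1 = unmarked_edges H
                     | Fail => False end)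
    (N := fun H1 o =>
            match o with
            | Res H2 => CheckEdges D u n0 H2 /\ (unmarked_edges H2 <= unmarked_edges H1)%nat
            | Fail => False end).
  - apply hoare_check_if.
  - apply hoare_call1.
    + intros H [phi [k [e [B [F [hn [he [hs hr]]]]]]]] H' happ.
      destruct (step_finish _ _ _ _ _ _ B happ) as [e1 [he1 [hs1 [hm1 [-> [B' hnr']]]]]].
      assert (e1 = e) by (apply (inv_red_unique B); auto). subst e1.
      split; [|apply count_edges_set_emk_le; auto].
      exists phi, k. split; [exact B'|split; [exact hnr'|split; [apply chk_finish|]]]; auto.
    + intros H [phi [k [e [B [F [hn [he [hs hr]]]]]]]] hfail.
      apply (hfail (set_emk H e EBlue)). eapply finish_applies; eauto.
  - intros H H1 _ [h _]; exact h.
  - intros H _ [].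
  - intros H H1 [H2|] _ [_ h1] h2; [|destruct h2]. destruct h2 as [h2 h3]. split; auto. lia.
Qed.

Lemma hoare_check_edge D u n0 : hoare check_edge (CheckEdges D u n0)
  (decreases (CheckEdges D u n0) unmarked_edges (no_unmarked_out u)).
Proof.
  eapply hoare_seq with (Mid := CheckRed D u n0 false)
    (M := fun H o =>
            match o with
            | Res H1 => CheckRed D u n0 false H1 /\ (unmarked_edges H1 < unmarked_edges H)%nat
            | Fail => no_unmarked_out u H end).
  - apply hoare_call1.
    + intros H [phi [k [B [hnr [F hn]]]]] H' happ.
      destruct (step_umedge _ _ _ _ _ _ B hnr happ) as [e [he [hs [hm [-> B']]]]].
      split.
      * exists phi, k, e. split; [exact B'|split; [eapply chk_unmarked_edge; eauto|]].
        repeat split; auto. simpl. unfold upd. rewrite Nat.eqb_refl. auto.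
      * apply count_edges_set_emk_lt; [|rewrite hm; auto|auto].
        rewrite (enc_edges (inv_enc B)). right; auto.
    + intros H [phi [k [B [hnr [F hn]]]]] hfail e he hs hm.
      apply (hfail (set_emk H e ERed)). eapply unmarked_edge_applies; eauto.
  - apply hoare_check_red.
  - intros H H1 _ [h _]; exact h.
  - intros H _ h; exact h.
  - intros H H1 [H2|] _ [_ h1] h2; [|destruct h2]. destruct h2 as [h2 h3]. split; auto. lia.
Qed.

Lemma hoare_check_edges D u n0 : hoare check_edges (CheckEdges D u n0)
  (fun _ o => exists H1, o = Res H1 /\ CheckEdges D u n0 H1 /\
     no_unmarked_out u H1).
Proof. apply (hoare_loop check_edge (CheckEdges D u n0) _ (unmarked_edges)). apply hoare_check_edge.
Qed.

Definition CheckState D H := exists phi k, Inv k H phi D None /\ CheckInv H D k true.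

Lemma hoare_check_edges_unroot D u n0 :
  hoare (Seq check_edges (Call [r_unroot1])) (CheckEdges D u n0)
    (fun _ o => match o with
                  | Res H2 => CheckState D H2 /\ (blue_nodes H2 < n0)%nat
                  | Fail => False end).
Proof.
  eapply hoare_seq with
    (Mid := fun H1 => CheckEdges D u n0 H1 /\ no_unmarked_out u H1)
    (N := fun H1 o => match o with
                        | Res H2 => CheckState D H2 /\ (blue_nodes H2 < n0)%nat
                        | Fail => False end).
  - apply hoare_check_edges.
  - apply hoare_call1.
    + intros H [[phi [k [B [hnr [F hn]]]]] hall] H' happ.
      assert (hb : forall e, In e (gE G) -> src G e = u -> emk H e = EBlue).
      { intros e he hs. destruct (inv_emk B e he) as [h|[h|h]]; auto.
        - exfalso; apply (hall e he hs h).
        - exfalso; apply (hnr e he h). }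
      destruct (step_unroot1 _ _ _ _ _ _ B hb happ) as [-> B'].
      split.
      * exists phi, k. split; auto. eapply chk_same_emk; eauto.
      * subst n0. destruct (inv_cur B u eq_refl) as [hu hbl].
        apply (count_nodes_set_nmk_lt is_blue H (phi u) NGrey); auto.
        apply (enc_in (inv_enc B)); auto. rewrite hbl; auto.
    + intros H [[phi [k [B [hnr [F hn]]]]] hall] hfail.
      eapply hfail. eapply unroot1_applies; eauto.
  - intros H H1 _ [H2 [e [h1 h2]]]. inversion e; subst; auto.
  - intros H _ [H2 [e _]]; discriminate.
  - intros H H1 o _ _ h; exact h.
Qed.

Lemma hoare_check_nodes D : hoare check_nodes (CheckState D)
  (fun _ o => exists H1, o = Res H1 /\ CheckState D H1 /\ no_blue_node H1).
Proof.
  apply (hoare_loop _ (CheckState D) _ blue_nodes).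
  eapply hoare_seq with
    (M := fun H o =>
            match o with
            | Res H1 =>
                (exists u, CheckEdges D u (blue_nodes H1) H1) /\ blue_nodes H1 = blue_nodes H
            | Fail => no_blue_node H end)
    (Mid := fun H1 => exists u, CheckEdges D u (blue_nodes H1) H1)
    (N := fun H1 o => match o with
                      | Res H2 => CheckState D H2 /\ (blue_nodes H2 < blue_nodes H1)%nat
                      | Fail => False end).
  - apply hoare_call1.
    + intros H [phi [k [B F]]] H' happ.
      destruct (step_root1 _ _ _ _ _ B happ) as [v [hv [hb [-> B']]]].
      split; [|reflexivity]. exists v, phi, k. split; auto. split; [apply (inv_no_red _ _ _ _ B)|].
      split; auto. eapply chk_same_emk; eauto.
    + intros H _ hfail x hx hb. eapply hfail. apply root1_applies; eauto.
  - intros H1 [u hI]. exact (hoare_check_edges_unroot D u (blue_nodes H1) H1 hI).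
  - intros H H1 _ [h _]; exact h.
  - intros H _ h; exact h.
  - intros H H1 [H2|] _ [_ h1] h2; [|destruct h2]. destruct h2 as [h2 h3]. split; auto. lia.
Qed.

Record Result (H : graph) (phi : nat -> nat) (D : nat -> option Z) : Prop := {
  res_E : forall e, In e (gE H) <-> In e (gE G);
  res_src : src H = upd (src G) e0 c;
  res_tgt : tgt H = upd (tgt G) e0 r;
  res_elab : elab H = upd (elab G) e0 [];
  res_emk : forall e, In e (gE G) -> emk H e = EBlue;
  res_in : forall v, In v (gV G) -> In (phi v) (gV H);
  res_lab : forall v, In v (gV G) -> nlab H (phi v) = nlab G v ++ [dist_atom (D v)];
  res_inj : forall v w, In v (gV G) -> In w (gV G) -> phi v = phi w -> v = w;
  res_cov : forall x, In x (gV H) -> exists v, In v (gV G) /\ phi v = x;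
  res_fix : forall v, In v (gV G) -> anchored v -> phi v = v;
  res_root : forall v, In v (gV G) -> nroot H (phi v) = Nat.eqb v r;
  res_nm : forall v, In v (gV G) -> nmk H (phi v) = NGrey \/ nmk H (phi v) = NUnmarked }.
Arguments res_E {H phi D}. Arguments res_src {H phi D}. Arguments res_tgt {H phi D}.
Arguments res_elab {H phi D}. Arguments res_emk {H phi D}. Arguments res_in {H phi D}.
Arguments res_lab {H phi D}. Arguments res_inj {H phi D}. Arguments res_cov {H phi D}.
Arguments res_fix {H phi D}. Arguments res_root {H phi D}. Arguments res_nm {H phi D}.

Lemma result_delete_counter k H phi D :
  Inv k H phi D None -> anchored_grey H phi -> no_blue_node H ->
  Result (set_nroot (del_node (del_edge H e0) c) r true) phi D.
Proof.
  intros B hfg hnb. pose proof (inv_enc B) as S.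
  assert (hpr : phi r = r) by (apply (enc_fix_root S)).
  constructor; simpl.
  - intros e. rewrite (enc_edges S). split.
    + intros h. apply in_remove in h. destruct h as [[->|h] hne]; [congruence|auto].
    + intros h. apply in_in_remove; [apply edge_ne_e0; auto|right; auto].
  - apply (enc_src S).
  - apply (enc_tgt S).
  - apply (enc_elab S).
  - intros e he. apply (inv_grey_blue B); auto.
    apply hfg; [apply src_in_gV; auto|apply anchored_src; auto].
  - intros v hv. apply in_in_remove; [apply (enc_ne_c S); auto|apply (enc_in S); auto].
  - apply (enc_lab S).
  - apply (enc_inj S).
  - intros x hx. apply in_remove in hx. destruct hx as [hx hxc].
    destruct (enc_cov S x hx) as [h|h]; [congruence|auto].
  - apply (enc_fix S).
  - intros v hv. unfold upd. rewrite <- hpr at 1.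
    destruct (Nat.eqb_spec (phi v) (phi r)) as [h|h].
    + apply (enc_inj S) in h; auto. subst v. rewrite Nat.eqb_refl; auto.
    + destruct (Nat.eqb_spec v r); [subst; congruence|].
      destruct (nroot H (phi v)) eqn:e; auto. apply (inv_root B) in e; auto. discriminate.
  - intros v hv. destruct (inv_nmk B v hv) as [h|[h|h]]; auto.
    exfalso. apply (hnb (phi v)); auto. apply (enc_in S); auto.
Qed.

Lemma step_delete_counter k H phi D H' : Inv k H phi D None -> rule_app r_delete_counter H H' ->
  H' = set_nroot (del_node (del_edge H e0) c) r true.
Proof.
  intros B [v1 [v2 [e [hv1 [hv2 [hne [hg1 [hg2 [he [hs [ht [hm [hl [hd ->]]]]]]]]]]]]]].
  pose proof (inv_enc B) as S.
  assert (e = e0).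
  { rewrite (enc_edges S) in he. destruct he as [<-|he]; auto.
    exfalso. destruct (inv_emk B e he) as [h|[h|h]]; congruence. }
  subst e. rewrite (enc_src S) in hs. rewrite (enc_tgt S) in ht.
  unfold upd in hs, ht. rewrite Nat.eqb_refl in hs, ht. subst. auto.
Qed.

Lemma delete_counter_applies k H phi D : Inv k H phi D None -> anchored_grey H phi ->
  rule_app r_delete_counter H (set_nroot (del_node (del_edge H e0) c) r true).
Proof.
  intros B hfg. pose proof (inv_enc B) as S.
  assert (hpr : phi r = r) by (apply (enc_fix_root S)).
  exists r, c, e0. repeat split.
  - rewrite <- hpr. apply (enc_in S); auto.
  - apply (enc_c_in S).
  - intros h; apply Hc; rewrite <- h; auto.
  - rewrite <- hpr. apply hfg; auto. apply anchored_root.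
  - apply (enc_c_green S).
  - rewrite (enc_edges S); left; auto.
  - rewrite (enc_src S). unfold upd; rewrite Nat.eqb_refl; auto.
  - rewrite (enc_tgt S). unfold upd; rewrite Nat.eqb_refl; auto.
  - apply (enc_dash S).
  - rewrite (enc_elab S). unfold upd; rewrite Nat.eqb_refl; auto.
  - intros e' he' hinc. rewrite (enc_edges S) in he'. destruct he' as [<-|he']; auto.
    exfalso. rewrite (enc_src_edge S), (enc_tgt_edge S) in hinc; auto.
    destruct hinc as [h|h]; [apply (enc_ne_c S (src G e')); [apply src_in_gV; auto|auto]
      |apply (enc_ne_c S (tgt G e')); [apply tgt_in_gV; auto|auto]].
Qed.

Definition no_unmarked_node H := forall x, In x (gV H) -> nmk H x <> NUnmarked.

Lemma hoare_no_deg_inv D : hoare (Loop (Call [r_no_deg_inv])) (fun H => exists phi, Result H phi D)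
  (fun _ o => exists H1, o = Res H1 /\ (exists phi, Result H1 phi D) /\ no_unmarked_node H1).
Proof.
  apply (hoare_loop _ _ _ (unmarked_nodes)). apply hoare_call1.
  - intros H [phi S] H' happ.
    destruct happ as [x [hx [hu ->]]].
    destruct (res_cov S x hx) as [v [hv <-]].
    split.
    + exists phi. destruct S; constructor; simpl; auto.
      intros w hw. unfold upd. destruct (Nat.eqb_spec (phi w) (phi v)); auto.
    + apply count_nodes_set_nmk_lt; auto. rewrite hu; auto.
  - intros H _ hfail x hx hu. apply (hfail (set_nmk H x NGrey)).
    exists x. auto.
Qed.

Definition CheckDone D H := CheckState D H /\ no_blue_node H.

Lemma check_done_facts D H : CheckDone D H -> exists phi k, Inv k H phi D None /\
  anchored_grey H phi /\ (k = -1 <-> has_improvable_edge G D).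
Proof.
  intros [[phi [k [B F]]] hnb].
  pose proof (no_blue_anchored_grey _ _ _ _ B hnb) as hfg.
  exists phi, k. split; auto. split; auto. split.
  - apply (chk_flagged F).
  - intros [e [he hr]]. apply (chk_blue F e he); auto.
    apply (inv_grey_blue B); auto. apply hfg; [apply src_in_gV; auto|apply anchored_src; auto].
Qed.

Lemma hoare_flag_test D : hoare (If (Call [r_flag]) FailC Skip) (CheckDone D)
  (fun H o => (has_improvable_edge G D /\ o = Fail) \/ (~ has_improvable_edge G D /\ o = Res H)).
Proof.
  eapply hoare_if with (NP := fun _ o => o = Fail) (NQ := fun H o => o = Res H)
    (MC := fun H o => match o with
                      | Res _ => has_improvable_edge G D
                      | Fail => ~ has_improvable_edge G D end).
  - apply hoare_call1.
    + intros H hE H' happ. destruct (check_done_facts D H hE) as [phi [k [B [_ hk]]]].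
      destruct (step_flag _ _ _ _ _ _ B happ) as [-> _]. apply hk; auto.
    + intros H hE hfail hex. destruct (check_done_facts D H hE) as [phi [k [B [_ hk]]]].
      apply hk in hex. subst k. eapply hfail. eapply flag_applies; eauto.
  - apply hoare_fail.
  - apply hoare_skip.
  - intros H o _ [H1 h] ->. left; auto.
  - intros H o _ h ->. right; auto.
Qed.

Definition final_result D H :=
  exists phi, Result H phi D /\ forall v, In v (gV G) -> nmk H (phi v) = NGrey.

Lemma hoare_cleanup D :
  hoare (Seq (Call [r_delete_counter]) (Loop (Call [r_no_deg_inv]))) (CheckDone D)
  (fun _ o => exists H', o = Res H' /\ final_result D H').
Proof.
  eapply hoare_seq with (Mid := fun H1 => exists phi, Result H1 phi D)
    (M := fun H o => match o with Res H1 => exists phi, Result H1 phi D | Fail => False end).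
  - apply hoare_call1.
    + intros H hE H' happ. destruct (check_done_facts D H hE) as [phi [k [B [hfg _]]]].
      rewrite (step_delete_counter _ _ _ _ _ B happ). exists phi.
      apply (result_delete_counter k); auto. apply hE.
    + intros H hE hfail. destruct (check_done_facts D H hE) as [phi [k [B [hfg _]]]].
      eapply hfail. eapply delete_counter_applies; eauto.
  - apply hoare_no_deg_inv.
  - intros H H1 _ h; exact h.
  - intros H _ [].
  - intros H H1 o _ _ [H2 [-> [[phi S] hnu]]]. exists H2. split; auto. exists phi. split; auto.
    intros v hv. destruct (res_nm S v hv) as [h|h]; auto.
    exfalso. apply (hnu (phi v)); auto. apply (res_in S); auto.
Qed.

Definition final_spec D (o : outcome) :=
  (has_improvable_edge G D /\ o = Fail) \/
  (~ has_improvable_edge G D /\ exists H', o = Res H' /\ final_result D H').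

Lemma hoare_Final D : hoare Final (CheckState D) (fun _ o => final_spec D o).
Proof.
  unfold Final. eapply hoare_seq with (Mid := CheckDone D) (N := fun _ o => final_spec D o).
  - apply (hoare_check_nodes D).
  - eapply hoare_seq with (Mid := CheckDone D)
      (N := fun _ o => exists H', o = Res H' /\ final_result D H').
    + apply hoare_flag_test.
    + apply hoare_cleanup.
    + intros H H1 hE [[_ h]|[hn h]]; [discriminate|]. inversion h; subst. auto.
    + intros H _ [[h1 h2]|[_ h]]; [|discriminate]. left; auto.
    + intros H H1 o _ [[_ h]|[hn h]] hN; [discriminate|]. right. split; auto.
  - intros H H1 _ [H2 [e [h1 h2]]]. inversion e; subst. split; auto.
  - intros H _ [H2 [e _]]; discriminate.
  - intros H H1 o _ _ h; exact h.
Qed.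

Definition dist_init (v : nat) : option Z := if Nat.eqb v r then Some 0 else None.

Record CountInv (k : Z) (H : graph) : Prop := {
  cnt_V : gV H = c :: gV G;
  cnt_E : gE H = e0 :: gE G;
  cnt_src : src H = upd (src G) e0 c;
  cnt_tgt : tgt H = upd (tgt G) e0 r;
  cnt_elab : elab H = upd (elab G) e0 [];
  cnt_emk0 : emk H e0 = EDashed;
  cnt_emk : forall e, In e (gE G) -> emk H e = EUnmarked;
  cnt_clab : nlab H c = [AInt k];
  cnt_cmk : nmk H c = NGreen;
  cnt_root : forall v, In v (gV G) -> nroot H v = false;
  cnt_nodes : forall v, In v (gV G) -> (nmk H v = NGrey /\ nlab H v = nlab G v /\ v <> r) \/
     (nmk H v = NBlue /\ nlab H v = nlab G v ++ [dist_atom (dist_init v)]);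
  cnt_cnt : Z.of_nat (length (filter (fun v => is_grey (nmk H v)) (gV G))) + k = nverts - 1 }.
Arguments cnt_V {k H}. Arguments cnt_E {k H}. Arguments cnt_src {k H}. Arguments cnt_tgt {k H}.
Arguments cnt_elab {k H}. Arguments cnt_emk0 {k H}. Arguments cnt_emk {k H}.
Arguments cnt_clab {k H}. Arguments cnt_cmk {k H}.
Arguments cnt_root {k H}. Arguments cnt_nodes {k H}. Arguments cnt_cnt {k H}.

Lemma gV_ne_c v : In v (gV G) -> v <> c.
Proof. intros h ->; contradiction. Qed.

Lemma step_count k H H' : CountInv k H -> rule_app r_count H H' ->
  CountInv (k + 1) H' /\ (grey_nodes H' < grey_nodes H)%nat.
Proof.
  intros C [v1 [v2 [i [hv1 [hv2 [hne [hg [hgr [hl ->]]]]]]]]].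
  rewrite (cnt_V C) in hv1, hv2.
  destruct hv1 as [<-|hv1]; [rewrite (cnt_cmk C) in hg; discriminate|].
  assert (v2 = c).
  { destruct hv2 as [<-|hv2]; auto. exfalso.
    destruct (cnt_nodes C v2 hv2) as [[h _]|[h _]]; congruence. }
  subst v2. rewrite (cnt_clab C) in hl. inversion hl; subst i.
  destruct (cnt_nodes C v1 hv1) as [[_ [hl1 hr1]]|[h _]]; [|congruence].
  assert (hv1c : v1 <> c) by (apply gV_ne_c; auto).
  split.
  - destruct C; constructor; simpl; auto.
    + unfold upd. rewrite Nat.eqb_refl. auto.
    + unfold upd. destruct (Nat.eqb_spec c v1); [congruence|auto].
    + intros v hv. assert (v <> c) by (apply gV_ne_c; auto).
      unfold upd. destruct (Nat.eqb_spec v c); [congruence|].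
      destruct (Nat.eqb_spec v v1) as [->|hvv]; [right; split; auto|].
      * rewrite hl1. unfold dist_init. destruct (Nat.eqb_spec v1 r); [congruence|auto].
      * apply cnt_nodes0; auto.
    + rewrite <- cnt_cnt0.
      assert (hd : NoDup (gV G)) by (destruct Hwf; auto).
      rewrite <- (length_filter_update (fun v => is_grey (nmk H v))
                    (fun v => is_grey (upd (nmk H) v1 NBlue v)) (gV G) v1 hd hv1).
      * lia.
      * rewrite hg; auto.
      * unfold upd; rewrite Nat.eqb_refl; auto.
      * intros y _ hy. unfold upd. destruct (Nat.eqb_spec y v1); [congruence|auto].
  - apply (count_nodes_set_nmk_lt is_grey H v1 NBlue); [|rewrite hg; auto|auto].
    rewrite (cnt_V C); right; auto.
Qed.

Lemma count_applies k H v : CountInv k H -> In v (gV G) -> nmk H v = NGrey ->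
  exists H', rule_app r_count H H'.
Proof.
  intros C hv hg. eexists. exists v, c, k. repeat split; auto.
  - rewrite (cnt_V C); right; auto.
  - rewrite (cnt_V C); left; auto.
  - apply gV_ne_c; auto.
  - apply (cnt_cmk C).
  - apply (cnt_clab C).
Qed.

Lemma hoare_count : hoare (Loop (Call [r_count])) (fun H => exists k, CountInv k H)
  (fun _ o => exists H1, o = Res H1 /\ (exists k, CountInv k H1) /\
     forall v, In v (gV G) -> nmk H1 v <> NGrey).
Proof.
  apply (hoare_loop _ _ _ (grey_nodes)). apply hoare_call1.
  - intros H [k C] H' happ.
    destruct (step_count _ _ _ C happ) as [C' hlt]. split; eauto.
  - intros H [k C] hfail v hv hg. destruct (count_applies _ _ _ C hv hg) as [H' ha].
    exact (hfail H' ha).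
Qed.

Lemma count_done_round_inv k H : CountInv k H ->
  (forall v, In v (gV G) -> nmk H v <> NGrey) -> RoundInv H.
Proof.
  intros C hng.
  assert (hall : forall v, In v (gV G) ->
    nmk H v = NBlue /\ nlab H v = nlab G v ++ [dist_atom (dist_init v)]).
  { intros v hv. destruct (cnt_nodes C v hv) as [[h _]|h]; auto. exfalso; apply (hng v hv h). }
  assert (hcnt : filter (fun v => is_grey (nmk H v)) (gV G) = []).
  { apply filter_all_false. intros v hv. destruct (hall v hv) as [h _]. rewrite h. auto. }
  pose proof (cnt_cnt C) as hk. rewrite hcnt in hk. simpl in hk.
  assert (hS : Encodes H (fun v => v) dist_init k).
  { destruct C; constructor; auto.
    - rewrite cnt_V0; left; auto.
    - intros v hv. rewrite cnt_V0; right; auto.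
    - intros v hv. apply gV_ne_c; auto.
    - intros v hv. apply (hall v hv).
    - intros v hv. rewrite (proj1 (hall v hv)). discriminate.
    - intros x hx. rewrite cnt_V0 in hx. destruct hx as [<-|hx]; [left|right]; eauto. }
  exists (fun v => v), dist_init, k, O. split; [|split; [|split; [|split; [|split]]]].
  - constructor; auto.
    + intros v hv. rewrite (proj1 (hall v hv)). auto.
    + intros v hv _. rewrite (proj1 (hall v hv)). auto.
    + intros v hv. rewrite (cnt_root C v hv). split; discriminate.
    + intros u hu; discriminate.
    + intros e he. rewrite (proj1 (hall (src G e) (src_in_gV e he))). discriminate.
    + intros e he _ _. apply (cnt_emk C); auto.
    + intros e he. left. apply (cnt_emk C); auto.
    + intros e he. rewrite (cnt_emk C); auto. discriminate.
    + intros e e' he _. rewrite (cnt_emk C); auto. discriminate.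
  - intros e he. apply (cnt_emk C); auto.
  - intros v d hv hd. unfold dist_init in hd. destruct (Nat.eqb_spec v r); [|discriminate].
    inversion hd; subst. exists []. simpl. auto.
  - intros v p hp hl. destruct p; [|simpl in hl; lia]. simpl in hp. subst v.
    unfold dist_init. rewrite Nat.eqb_refl. simpl. lia.
  - assert (0 < nverts) by (unfold nverts; destruct (gV G); [destruct Hr|simpl; lia]). lia.
  - simpl. lia.
Qed.

Lemma rounds_done_check_state H : RoundInv H -> counter_nonpos H ->
  exists D, dist_sound G r D /\ dist_bounded G r D (length (gV G) - 1) /\ CheckState D H.
Proof.
  intros [phi [D [k [np [B [hu [hs [hc [hk hn]]]]]]]]] hst.
  assert (k = 0).
  { pose proof (hst k (enc_c_lab (inv_enc B))). lia. }
  subst k. assert (np = length (gV G) - 1)%nat by (unfold nverts in hn; lia). subst np.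
  exists D. split; auto. split; auto. exists phi, 0. split; auto.
  constructor; auto.
  - intros h; discriminate.
  - intros e he hb. rewrite hu in hb; auto. discriminate.
  - intros e he hb. rewrite hu in hb; auto. discriminate.
Qed.

Definition run_spec o :=
  exists D, dist_sound G r D /\ dist_bounded G r D (length (gV G) - 1) /\ final_spec D o.

Definition after_set_counter := Seq (Loop (Call [r_count])) (Seq (Loop round) Final).

Lemma hoare_after_set_counter : hoare after_set_counter (fun H => exists k, CountInv k H)
  (fun _ => run_spec).
Proof.
  eapply hoare_seq
    with (Mid := fun H1 => (exists k, CountInv k H1) /\ forall v, In v (gV G) -> nmk H1 v <> NGrey)
    (N := fun _ => run_spec).
  - apply hoare_count.
  - eapply hoare_seq with (Mid := fun H1 => RoundInv H1 /\ counter_nonpos H1)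
      (N := fun _ => run_spec).
    + eapply hoare_conseq; [apply hoare_rounds| |].
      * intros H [[k C] hng]. eapply count_done_round_inv; eauto.
      * intros H o _ h; exact h.
    + intros H [hL hst]. destruct (rounds_done_check_state H hL hst) as [D [hs [hc hF]]].
      destruct (hoare_Final D H hF) as [t o]. split; auto. intros o' hx. exists D. auto.
    + intros H H1 _ [H2 [e [h1 h2]]]. inversion e; subst. auto.
    + intros H _ [H2 [e _]]; discriminate.
    + intros H H1 o _ _ h; exact h.
  - intros H H1 _ [H2 [e [h1 h2]]]. inversion e; subst. auto.
  - intros H _ [H2 [e _]]; discriminate.
  - intros H H1 o _ _ h; exact h.
Qed.

Lemma result_iso H phi D : Result H phi D ->
  (forall v, In v (gV G) -> nmk H (phi v) = NGrey) -> iso H (bf_graph D).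
Proof.
  intros S hgr.
  pose proof (res_inj S) as hinj.
  assert (hps : forall x, In x (gV H) ->
    In (inv_on (gV G) phi x) (gV G) /\ phi (inv_on (gV G) phi x) = x).
  { intros x hx. apply inv_on_spec. apply (res_cov S); auto. }
  assert (hfix : forall v, In v (gV G) -> anchored v -> inv_on (gV G) phi v = v).
  { intros v hv hav. rewrite <- (res_fix S v hv hav) at 1. apply inv_on_apply; auto. }
  exists (inv_on (gV G) phi), (fun e => e). simpl.
  split; [|split; [|split; [|split; [|split; [|split; [|split]]]]]].
  - intros x hx. apply (hps x hx).
  - intros x y hx hy h. destruct (hps x hx) as [_ h1]. destruct (hps y hy) as [_ h2]. congruence.
  - intros v hv. exists (phi v). split; [apply (res_in S); auto|apply inv_on_apply; auto].
  - intros e he. apply (res_E S); auto.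
  - auto.
  - intros e he. exists e. split; auto. apply (res_E S); auto.
  - intros e he. apply (res_E S) in he.
    rewrite (res_src S), (res_tgt S), (res_elab S), (res_emk S); auto.
    unfold upd. destruct (Nat.eqb_spec e e0) as [->|_]; [contradiction|].
    rewrite hfix, hfix; auto using src_in_gV, tgt_in_gV, anchored_src, anchored_tgt.
  - intros x hx. destruct (hps x hx) as [hv <-]. rewrite inv_on_apply by auto.
    rewrite (res_lab S), (res_root S), hgr; auto.
Qed.
End Counter.

Lemma step_set_counter H1 : rule_app r_set_counter G H1 ->
  exists c e0, ~ In c (gV G) /\ ~ In e0 (gE G) /\ CountInv c e0 0 H1.
Proof.
  intros [v [c [e [hv [hg [hrt [hc [he ->]]]]]]]].
  assert (v = r) by (apply Hroot; auto). subst v.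
  assert (hvc : forall v, In v (gV G) -> v <> c) by (intros v' hv' ->; contradiction).
  exists c, e. split; auto. split; auto. constructor; simpl; auto.
  - unfold upd; rewrite Nat.eqb_refl; auto.
  - intros e' he'. unfold upd.
    destruct (Nat.eqb_spec e' e); [subst; contradiction|apply Hedges; auto].
  - unfold upd; rewrite Nat.eqb_refl; auto.
  - unfold upd; rewrite Nat.eqb_refl; auto.
  - intros w hw. unfold upd. destruct (Nat.eqb_spec w c); [exfalso; apply (hvc w hw); auto|].
    destruct (Nat.eqb_spec w r) as [hwr|hwr]; auto. destruct (nroot G w) eqn:h; auto.
    exfalso; apply hwr; apply Hroot; auto.
  - intros w hw. unfold upd. destruct (Nat.eqb_spec w c); [exfalso; apply (hvc w hw); auto|].
    destruct (Nat.eqb_spec w r) as [->|hne].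
    + right. split; auto. unfold dist_init. rewrite Nat.eqb_refl. auto.
    + left. split; auto.
  - assert (hd : NoDup (gV G)) by (destruct Hwf; auto).
    pose proof (length_filter_update (fun _ => true)
       (fun v => is_grey (upd (upd (nmk G) r NBlue) c NGreen v)) (gV G) r hd Hr eq_refl) as h.
    rewrite filter_true in h. unfold nverts. rewrite <- h.
    + rewrite Nat2Z.inj_succ. lia.
    + unfold upd. destruct (Nat.eqb_spec r c); [exfalso; apply (hvc r Hr); auto|].
      rewrite Nat.eqb_refl. auto.
    + intros y hy hyr. unfold upd. destruct (Nat.eqb_spec y c); [exfalso; apply (hvc y hy); auto|].
      destruct (Nat.eqb_spec y r); [contradiction|]. rewrite Hgrey; auto.
Qed.

Lemma hoare_Main : hoare Main (fun H => H = G)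
  (fun _ o => exists c e0, ~ In c (gV G) /\ ~ In e0 (gE G) /\ run_spec c e0 o).
Proof.
  unfold Main. eapply hoare_seq with
    (M := fun _ o => match o with
                     | Res H1 => exists c e0, ~ In c (gV G) /\ ~ In e0 (gE G) /\ CountInv c e0 0 H1
                     | Fail => False end)
    (Mid := fun H1 => exists c e0, ~ In c (gV G) /\ ~ In e0 (gE G) /\ CountInv c e0 0 H1)
    (N := fun _ o => exists c e0, ~ In c (gV G) /\ ~ In e0 (gE G) /\ run_spec c e0 o).
  - apply hoare_call1.
    + intros H -> H' happ. apply step_set_counter; auto.
    + intros H -> hfail. destruct (exists_fresh (gV G)) as [c hc].
      destruct (exists_fresh (gE G)) as [e he].
      eapply hfail.
      exists r, c, e. repeat split; eauto.
  - intros H1 [c [e0 [hc [he C]]]].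
    destruct (hoare_after_set_counter c e0 hc he H1 (ex_intro _ 0 C)) as [t o]. split; auto.
    intros o' hx. exists c, e0. auto.
  - intros H H1 _ h; exact h.
  - intros H _ [].
  - intros H H1 o _ _ h; exact h.
Qed.

Lemma Main_outcome o : exec Main G o ->
  (neg_cycle_reachable G r -> o = Fail) /\
  (~ neg_cycle_reachable G r -> exists H H0, o = Res H /\ bf_result G r H0 /\ iso H H0).
Proof.
  intros hx. destruct (proj2 (hoare_Main G eq_refl) o hx)
    as [c [e0 [_ [he [D [hs [hb [[himp ->]|[hno [H [-> hres]]]]]]]]]]].
  - split; auto. intros hneg. exfalso. exact (dist_no_improvable G r Hwf Hr D hneg hs hb himp).
  - split.
    + intros hneg. exfalso. exact (hno (neg_cycle_improvable G r Hwf Hr D hneg hb)).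
    + intros hneg. destruct hres as [phi [S hg]]. exists H, (bf_graph D).
      split; [reflexivity|split]; [apply bf_graph_result; auto|eapply result_iso; eauto].
Qed.

End Simulation.

Close Scope Z_scope.

Theorem mainTheorem7 (G : graph) (r : nat) :
  wf G ->
  (forall v, In v (gV G) -> nmk G v = NGrey) ->
  In r (gV G) -> nroot G r = true ->
  (forall v, In v (gV G) -> nroot G v = true -> v = r) ->
  (forall e, In e (gE G) -> emk G e = EUnmarked /\ exists w, elab G e = [AInt w]) ->
  (forall e, In e (gE G) -> src G e <> tgt G e) ->
  terminates Main G /\
  (neg_cycle_reachable G r ->
     exec Main G Fail /\ (forall o, exec Main G o -> o = Fail)) /\
  (~ neg_cycle_reachable G r ->
     (exists H, exec Main G (Res H)) /\
     (forall o, exec Main G o ->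
        exists H H0, o = Res H /\ bf_result G r H0 /\ iso H H0)).
Proof.
  intros hwf hgrey hr hrr hroot hedges hnl.
  pose proof (Main_outcome G r hwf hgrey hr hrr hroot hedges hnl) as hout.
  destruct (hoare_Main G r hwf hgrey hr hrr hroot hedges hnl G eq_refl) as [ht _].
  destruct (terminates_exec _ _ ht) as [o0 hx0].
  split; [exact ht|split; intros hneg].
  - split; [rewrite <- (proj1 (hout o0 hx0) hneg); exact hx0|].
    intros o hx. exact (proj1 (hout o hx) hneg).
  - split; [|intros o hx; exact (proj2 (hout o hx) hneg)].
    destruct (proj2 (hout o0 hx0) hneg) as [H [H0 [-> _]]]. eauto.
Qed.
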